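(* Let $t$, $u$ be two terms of type $A$ in context $\Gamma$ of $\mathrm{IS4}_C$. If for all Cartesian closed categories $\mathcal{M}$ equipped with a right-adjoint comonad it is the case that $[\![t]\!] = [\![u]\!] : \mathcal{M}([\![\Gamma]\!],[\![A]\!])$, then $t \equiv u$ in context $\Gamma$ at type $A$.
   Context: $\mathrm{IS4}_C$: types $A ::= \iota\mid A\to B\mid\Box A$; contexts $\Gamma::=\cdot\mid\Gamma,A\mid\Gamma,\mathsf{lock}$ ($\mathsf{lock}$ the context lock); $\Delta\mathrel{R}\Gamma$ holds when $\Gamma$ extends $\Delta$ by any types and locks. Terms: STLC plus $\mathsf{box}\,t:\Box A$ in $\Gamma$ from $t:A$ in $\Gamma,\mathsf{lock}$, and $\mathsf{unbox}(t,e):A$ in $\Gamma$ from $t:\Box A$ in $\Delta$ and $e:\Delta\mathrel{R}\Gamma$. Equational theory: function $\beta,\eta$; $\mathsf{unbox}(\mathsf{box}\,t,e)\equiv t[(\mathrm{id},e)]$; $t\equiv\mathsf{box}(\mathsf{unbox}(t,e_1))$ with $e_1$ adding one lock (and the identification of explicit weakening $\mathsf{unbox}(t,e\cdot e')\equiv\mathsf{unbox}(\mathit{wk}(\mathit{toOPE}(e),t),e')$ for lock-free $e$). Interpretation is in a CCC with a comonad $\Box$ having a left adjoint $\mathsf{lock}\dashv\Box$. *)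

Inductive Ty : Type :=
| iota : Ty
| arr : Ty -> Ty -> Ty
| box : Ty -> Ty.

Inductive Ctx : Type :=
| cnil : Ctx
| cext : Ctx -> Ty -> Ctx
| clock : Ctx -> Ctx.

(* Ext D G  :  D R G, i.e. G extends D by any types and locks *)
Inductive Ext (D : Ctx) : Ctx -> Type :=
| ext_nil : Ext D D
| ext_ty : forall G A, Ext D G -> Ext D (cext G A)
| ext_lk : forall G, Ext D G -> Ext D (clock G).
Arguments ext_nil {D}.
Arguments ext_ty {D G} A e.
Arguments ext_lk {D G} e.

Inductive LFExt (D : Ctx) : Ctx -> Type :=
| lf_nil : LFExt D D
| lf_ty : forall G A, LFExt D G -> LFExt D (cext G A).
Arguments lf_nil {D}.
Arguments lf_ty {D G} A e.

Fixpoint extApp {D G G'} (e : Ext D G) (e' : Ext G G') {struct e'} : Ext D G' :=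
  match e' in Ext _ X return Ext D X with
  | ext_nil => e
  | ext_ty A e'' => ext_ty A (extApp e e'')
  | ext_lk e'' => ext_lk (extApp e e'')
  end.

Fixpoint lfToExt {D G} (e : LFExt D G) : Ext D G :=
  match e in LFExt _ X return Ext D X with
  | lf_nil => ext_nil
  | lf_ty A e' => ext_ty A (lfToExt e')
  end.

(* variables cannot be used across a lock *)
Inductive Var : Ctx -> Ty -> Type :=
| vz : forall G A, Var (cext G A) A
| vs : forall G A B, Var G A -> Var (cext G B) A.
Arguments vz {G A}.
Arguments vs {G A} B v.

Inductive Tm : Ctx -> Ty -> Type :=
| var : forall G A, Var G A -> Tm G A
| lam : forall G A B, Tm (cext G A) B -> Tm G (arr A B)
| app : forall G A B, Tm G (arr A B) -> Tm G A -> Tm G B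
| tbox : forall G A, Tm (clock G) A -> Tm G (box A)
| unbox : forall D G A, Tm D (box A) -> Ext D G -> Tm G A.
Arguments var {G A} v.
Arguments lam {G A B} t.
Arguments app {G A B} t u.
Arguments tbox {G A} t.
Arguments unbox {D G A} t e.

Fixpoint lfVar {D G A} (e : LFExt D G) (v : Var D A) : Var G A :=
  match e in LFExt _ X return Var X A with
  | lf_nil => v
  | lf_ty B e' => vs B (lfVar e' v)
  end.

(* G' is G with extra *types* interleaved (locks are never dropped).   *)

Fixpoint OPE (G' G : Ctx) {struct G} : Type :=
  match G with
  | cnil => LFExt cnil G'
  | cext G0 A => { G1 : Ctx & (OPE G1 G0 * LFExt (cext G1 A) G')%type }
  | clock G0 => { G1 : Ctx & (OPE G1 G0 * LFExt (clock G1) G')%type }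
  end.

Fixpoint idOPE (G : Ctx) : OPE G G :=
  match G return OPE G G with
  | cnil => lf_nil
  | cext G0 A => existT _ G0 (idOPE G0, lf_nil)
  | clock G0 => existT _ G0 (idOPE G0, lf_nil)
  end.

Definition dropOPE {G G'} (B : Ty) : OPE G' G -> OPE (cext G' B) G :=
  match G return OPE G' G -> OPE (cext G' B) G with
  | cnil => fun o => lf_ty B o
  | cext G0 A => fun o =>
      match o with existT _ G1 (o1, lf) => existT _ G1 (o1, lf_ty B lf) end
  | clock G0 => fun o =>
      match o with existT _ G1 (o1, lf) => existT _ G1 (o1, lf_ty B lf) end
  end.

Definition keepOPE {G G'} (A : Ty) (o : OPE G' G) : OPE (cext G' A) (cext G A) :=
  existT _ G' (o, lf_nil).

Definition keepLockOPE {G G'} (o : OPE G' G) : OPE (clock G') (clock G) :=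
  existT _ G' (o, lf_nil).

Fixpoint toOPE {D G} (e : LFExt D G) : OPE G D :=
  match e in LFExt _ X return OPE X D with
  | lf_nil => idOPE D
  | lf_ty A e' => dropOPE A (toOPE e')
  end.

Fixpoint wkVar {G A} (v : Var G A) {struct v} : forall G', OPE G' G -> Var G' A :=
  match v in Var X A0 return forall G', OPE G' X -> Var G' A0 with
  | @vz G0 A0 => fun G' o =>
      match o with existT _ G1 (_, lf) => lfVar lf (@vz G1 A0) end
  | @vs G0 A0 B v' => fun G' o =>
      match o with existT _ G1 (o1, lf) => lfVar lf (vs B (wkVar v' G1 o1)) end
  end.

Fixpoint factorOPE {D G} (e : Ext D G) {struct e}
  : forall G', OPE G' G -> { D' : Ctx & (OPE D' D * Ext D' G')%type } :=
  match e in Ext _ X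
        return forall G', OPE G' X -> { D' : Ctx & (OPE D' D * Ext D' G')%type } with
  | ext_nil => fun G' o => existT _ G' (o, ext_nil)
  | @ext_ty _ G0 A e' => fun G' o =>
      match o with existT _ G1 (o1, lf) =>
        match factorOPE e' G1 o1 with existT _ D' (o2, e2) =>
          existT _ D' (o2, extApp e2 (extApp (ext_ty A ext_nil) (lfToExt lf)))
        end
      end
  | @ext_lk _ G0 e' => fun G' o =>
      match o with existT _ G1 (o1, lf) =>
        match factorOPE e' G1 o1 with existT _ D' (o2, e2) =>
          existT _ D' (o2, extApp e2 (extApp (ext_lk ext_nil) (lfToExt lf)))
        end
      end
  end.

Fixpoint wk {G A} (t : Tm G A) {struct t} : forall G', OPE G' G -> Tm G' A :=
  match t in Tm X A0 return forall G', OPE G' X -> Tm G' A0 with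
  | var v => fun G' o => var (wkVar v G' o)
  | @lam G0 A1 B t' => fun G' o => lam (wk t' (cext G' A1) (keepOPE A1 o))
  | app t1 t2 => fun G' o => app (wk t1 G' o) (wk t2 G' o)
  | tbox t' => fun G' o => tbox (wk t' (clock G') (keepLockOPE o))
  | unbox t' e => fun G' o =>
      match factorOPE e G' o with existT _ D' (o', e') => unbox (wk t' D' o') e' end
  end.

Fixpoint Sub (G D : Ctx) {struct D} : Type :=
  match D with
  | cnil => unit
  | cext D0 A => (Sub G D0 * Tm G A)%type
  | clock D0 => { G' : Ctx & (Sub G' D0 * Ext G' G)%type }
  end.

Fixpoint wkSub (D : Ctx) {struct D} : forall G G', OPE G' G -> Sub G D -> Sub G' D :=
  match D return forall G G', OPE G' G -> Sub G D -> Sub G' D with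
  | cnil => fun _ _ _ _ => tt
  | cext D0 A => fun G G' o s => (wkSub D0 G G' o (fst s), wk (snd s) G' o)
  | clock D0 => fun G G' o s =>
      match s with existT _ G1 (s1, e1) =>
        match factorOPE e1 G' o with existT _ G2 (o2, e2) =>
          existT _ G2 (wkSub D0 G1 G2 o2 s1, e2)
        end
      end
  end.

Fixpoint factorSub {D' D} (e : Ext D' D) {struct e}
  : forall G, Sub G D -> { G' : Ctx & (Sub G' D' * Ext G' G)%type } :=
  match e in Ext _ X
        return forall G, Sub G X -> { G' : Ctx & (Sub G' D' * Ext G' G)%type } with
  | ext_nil => fun G s => existT _ G (s, ext_nil)
  | ext_ty A e' => fun G s => factorSub e' G (fst s)
  | ext_lk e' => fun G s =>
      match s with existT _ G1 (s1, e1) =>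
        match factorSub e' G1 s1 with existT _ G2 (s2, e2) =>
          existT _ G2 (s2, extApp e2 e1)
        end
      end
  end.

Fixpoint substVar {D A} (v : Var D A) {struct v} : forall G, Sub G D -> Tm G A :=
  match v in Var X A0 return forall G, Sub G X -> Tm G A0 with
  | vz => fun G s => snd s
  | vs _ v' => fun G s => substVar v' G (fst s)
  end.

Fixpoint idSub (G : Ctx) : Sub G G :=
  match G return Sub G G with
  | cnil => tt
  | cext G0 A => (wkSub G0 G0 (cext G0 A) (dropOPE A (idOPE G0)) (idSub G0), var vz)
  | clock G0 => existT _ G0 (idSub G0, ext_lk ext_nil)
  end.

Fixpoint subst {D A} (t : Tm D A) {struct t} : forall G, Sub G D -> Tm G A :=
  match t in Tm X A0 return forall G, Sub G X -> Tm G A0 with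
  | var v => fun G s => substVar v G s
  | @lam D0 A1 B t' => fun G s =>
      lam (subst t' (cext G A1)
             (wkSub D0 G (cext G A1) (dropOPE A1 (idOPE G)) s, var vz))
  | app t1 t2 => fun G s => app (subst t1 G s) (subst t2 G s)
  | @tbox D0 A1 t' => fun G s =>
      tbox (subst t' (clock G)
              (existT (fun G' => (Sub G' D0 * Ext G' (clock G))%type)
                      G (s, ext_lk ext_nil)))
  | unbox t' e => fun G s =>
      match factorSub e G s with existT _ G' (s', e') => unbox (subst t' G' s') e' end
  end.

Inductive conv : forall G A, Tm G A -> Tm G A -> Prop :=
| cv_refl : forall G A (t : Tm G A), conv _ _ t t
| cv_sym : forall G A (t u : Tm G A), conv _ _ t u -> conv _ _ u t
| cv_trans : forall G A (t u v : Tm G A), conv _ _ t u -> conv _ _ u v -> conv _ _ t v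
| cv_lam : forall G A B (t t' : Tm (cext G A) B), conv _ _ t t' -> conv _ _ (lam t) (lam t')
| cv_app : forall G A B (t t' : Tm G (arr A B)) (u u' : Tm G A),
    conv _ _ t t' -> conv _ _ u u' -> conv _ _ (app t u) (app t' u')
| cv_box : forall G A (t t' : Tm (clock G) A), conv _ _ t t' -> conv _ _ (tbox t) (tbox t')
| cv_unbox : forall D G A (t t' : Tm D (box A)) (e : Ext D G),
    conv _ _ t t' -> conv _ _ (unbox t e) (unbox t' e)
| cv_beta_fun : forall G A B (t : Tm (cext G A) B) (u : Tm G A),
    conv _ _ (app (lam t) u) (subst t G (idSub G, u))
| cv_eta_fun : forall G A B (t : Tm G (arr A B)),
    conv _ _ t (lam (app (wk t (cext G A) (dropOPE A (idOPE G))) (var vz)))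
| cv_beta_box : forall D G A (t : Tm (clock D) A) (e : Ext D G),
    conv _ _ (unbox (tbox t) e)
         (subst t G (existT (fun G' => (Sub G' D * Ext G' G)%type) D (idSub D, e)))
| cv_eta_box : forall G A (t : Tm G (box A)),
    conv _ _ t (tbox (unbox t (ext_lk ext_nil)))
| cv_wk : forall D D'' G A (t : Tm D (box A)) (e : LFExt D D'') (e' : Ext D'' G),
    conv _ _ (unbox t (extApp (lfToExt e) e')) (unbox (wk t D'' (toOPE e)) e').
Arguments conv {G A} t u.

Record Model : Type := {
  Ob : Type;
  Hom : Ob -> Ob -> Type;
  idm : forall X, Hom X X;
  comp : forall X Y Z, Hom Y Z -> Hom X Y -> Hom X Z;
  comp_id_l : forall X Y (f : Hom X Y), comp _ _ _ (idm Y) f = f;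
  comp_id_r : forall X Y (f : Hom X Y), comp _ _ _ f (idm X) = f;
  comp_assoc : forall X Y Z W (f : Hom X Y) (g : Hom Y Z) (h : Hom Z W),
      comp _ _ _ h (comp _ _ _ g f) = comp _ _ _ (comp _ _ _ h g) f;
  one : Ob;
  bang : forall X, Hom X one;
  bang_uniq : forall X (f : Hom X one), f = bang X;
  prod : Ob -> Ob -> Ob;
  pi1 : forall X Y, Hom (prod X Y) X;
  pi2 : forall X Y, Hom (prod X Y) Y;
  pair : forall X Y Z, Hom Z X -> Hom Z Y -> Hom Z (prod X Y);
  pi1_pair : forall X Y Z (f : Hom Z X) (g : Hom Z Y),
      comp _ _ _ (pi1 X Y) (pair _ _ _ f g) = f;
  pi2_pair : forall X Y Z (f : Hom Z X) (g : Hom Z Y),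
      comp _ _ _ (pi2 X Y) (pair _ _ _ f g) = g;
  pair_uniq : forall X Y Z (h : Hom Z (prod X Y)),
      h = pair _ _ _ (comp _ _ _ (pi1 X Y) h) (comp _ _ _ (pi2 X Y) h);
  exp : Ob -> Ob -> Ob;
  ev : forall X Y, Hom (prod (exp X Y) X) Y;
  cur : forall X Y Z, Hom (prod Z X) Y -> Hom Z (exp X Y);
  ev_cur : forall X Y Z (f : Hom (prod Z X) Y),
      comp _ _ _ (ev X Y)
        (pair _ _ _ (comp _ _ _ (cur _ _ _ f) (pi1 Z X)) (pi2 Z X)) = f;
  cur_uniq : forall X Y Z (g : Hom Z (exp X Y)),
      cur _ _ _ (comp _ _ _ (ev X Y)
                   (pair _ _ _ (comp _ _ _ g (pi1 Z X)) (pi2 Z X))) = g;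
  Bx : Ob -> Ob;
  bmap : forall X Y, Hom X Y -> Hom (Bx X) (Bx Y);
  bmap_id : forall X, bmap _ _ (idm X) = idm (Bx X);
  bmap_comp : forall X Y Z (f : Hom X Y) (g : Hom Y Z),
      bmap _ _ (comp _ _ _ g f) = comp _ _ _ (bmap _ _ g) (bmap _ _ f);
  beps : forall X, Hom (Bx X) X;
  beps_nat : forall X Y (f : Hom X Y),
      comp _ _ _ (beps Y) (bmap _ _ f) = comp _ _ _ f (beps X);
  bdelta : forall X, Hom (Bx X) (Bx (Bx X));
  bdelta_nat : forall X Y (f : Hom X Y),
      comp _ _ _ (bdelta Y) (bmap _ _ f) = comp _ _ _ (bmap _ _ (bmap _ _ f)) (bdelta X);
  comonad_l : forall X, comp _ _ _ (beps (Bx X)) (bdelta X) = idm (Bx X);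
  comonad_r : forall X, comp _ _ _ (bmap _ _ (beps X)) (bdelta X) = idm (Bx X);
  comonad_assoc : forall X,
      comp _ _ _ (bdelta (Bx X)) (bdelta X) = comp _ _ _ (bmap _ _ (bdelta X)) (bdelta X);
  Lk : Ob -> Ob;
  lmap : forall X Y, Hom X Y -> Hom (Lk X) (Lk Y);
  lmap_id : forall X, lmap _ _ (idm X) = idm (Lk X);
  lmap_comp : forall X Y Z (f : Hom X Y) (g : Hom Y Z),
      lmap _ _ (comp _ _ _ g f) = comp _ _ _ (lmap _ _ g) (lmap _ _ f);
  aunit : forall X, Hom X (Bx (Lk X));
  acounit : forall Y, Hom (Lk (Bx Y)) Y;
  aunit_nat : forall X Y (f : Hom X Y),
      comp _ _ _ (aunit Y) f = comp _ _ _ (bmap _ _ (lmap _ _ f)) (aunit X);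
  acounit_nat : forall X Y (f : Hom X Y),
      comp _ _ _ (acounit Y) (lmap _ _ (bmap _ _ f)) = comp _ _ _ f (acounit X);
  triangle_l : forall X,
      comp _ _ _ (acounit (Lk X)) (lmap _ _ (aunit X)) = idm (Lk X);
  triangle_r : forall Y,
      comp _ _ _ (bmap _ _ (acounit Y)) (aunit (Bx Y)) = idm (Bx Y)
}.

Arguments idm {m} X.
Arguments comp {m X Y Z} g f.
Arguments one {m}.
Arguments prod {m} X Y.
Arguments pi1 {m X Y}.
Arguments pi2 {m X Y}.
Arguments pair {m X Y Z} f g.
Arguments exp {m} X Y.
Arguments ev {m X Y}.
Arguments cur {m X Y Z} f.
Arguments Bx {m} X.
Arguments bmap {m X Y} f.
Arguments beps {m} X.
Arguments bdelta {m} X.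
Arguments Lk {m} X.
Arguments lmap {m X Y} f.
Arguments aunit {m} X.
Arguments acounit {m} Y.

Section Interp.
Variable M : Model.
Variable I : Ob M.

Fixpoint semTy (A : Ty) : Ob M :=
  match A with
  | iota => I
  | arr A B => exp (semTy A) (semTy B)
  | box A => Bx (semTy A)
  end.

Fixpoint semCtx (G : Ctx) : Ob M :=
  match G with
  | cnil => one
  | cext G A => prod (semCtx G) (semTy A)
  | clock G => Lk (semCtx G)
  end.

Fixpoint semVar {G A} (v : Var G A) : Hom M (semCtx G) (semTy A) :=
  match v in Var X A0 return Hom M (semCtx X) (semTy A0) with
  | vz => pi2
  | vs _ v' => comp (semVar v') pi1
  end.

Fixpoint semUnbox {D G} (e : Ext D G) {struct e}
  : forall X, Hom M (semCtx D) (Bx X) -> Hom M (semCtx G) X :=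
  match e in Ext _ Y return forall X, Hom M (semCtx D) (Bx X) -> Hom M (semCtx Y) X with
  | ext_nil => fun X f => comp (beps X) f
  | ext_ty _ e' => fun X f => comp (semUnbox e' X f) pi1
  | ext_lk e' => fun X f =>
      comp (acounit X) (lmap (semUnbox e' (Bx X) (comp (bdelta X) f)))
  end.

Fixpoint semTm {G A} (t : Tm G A) : Hom M (semCtx G) (semTy A) :=
  match t in Tm X A0 return Hom M (semCtx X) (semTy A0) with
  | var v => semVar v
  | lam t' => cur (semTm t')
  | app t1 t2 => comp ev (pair (semTm t1) (semTm t2))
  | @tbox G0 _ t' => comp (bmap (semTm t')) (aunit (semCtx G0))
  | @unbox _ _ A0 t' e => semUnbox e (semTy A0) (semTm t')
  end.

End Interp.

From Stdlib Require Import Program.Equality FunctionalExtensionality ProofIrrelevance Lia.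

(* Completeness by normalisation by evaluation.  Presheaves over contexts and
   order-preserving embeddings form a model: exponentials and box are Kripke-style
   (box quantifies over weakenings followed by extensions [Γ' R Δ]), and the lock sends a
   presheaf to pairs of an element at [Δ] and an extension [Δ R Γ], which is left adjoint
   to box.  Interpreting [iota] by all terms of type [iota],
   reflection and reification give [nf t := reify ([[t]] idEnv)], a function of the
   interpretation of [t] alone.  A Kripke logical relation between terms and semantic
   values, closed under conversion and preserved by substitution, shows [t == nf t]; so
   equal interpretations in this single model already force [t == u]. *)

(** * Extensions and order-preserving embeddings *)

Fixpoint ctx_length (G : Ctx) : nat :=
  match G with cnil => 0 | cext G _ => S (ctx_length G) | clock G => S (ctx_length G) end.

Lemma ext_length_le {D G} (e : Ext D G) : ctx_length D <= ctx_length G.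
Proof. induction e; simpl; lia. Qed.

Lemma lfext_length_le {D G} (e : LFExt D G) : ctx_length D <= ctx_length G.
Proof. induction e; simpl; lia. Qed.

Lemma ext_unique {D G} (e1 e2 : Ext D G) : e1 = e2.
Proof.
  induction e1; dependent destruction e2; try (f_equal; auto; fail);
    match goal with e : Ext _ _ |- _ => pose proof (ext_length_le e) end; simpl in *; lia.
Qed.

Lemma lfext_unique {D G} (e1 e2 : LFExt D G) : e1 = e2.
Proof.
  induction e1; dependent destruction e2; try (f_equal; auto; fail);
    match goal with e : LFExt _ _ |- _ => pose proof (lfext_length_le e) end; simpl in *; lia.
Qed.

Ltac existT_pair_congr :=
  lazymatch goal with
  | |- existT _ ?x _ = existT _ ?x _ => apply f_equal, f_equal2
  end;
  auto; try apply lfext_unique; try apply ext_unique.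

Fixpoint lfApp {D G G'} (e : LFExt D G) (e' : LFExt G G') {struct e'} : LFExt D G' :=
  match e' in LFExt _ X return LFExt D X with
  | lf_nil => e
  | lf_ty A e'' => lf_ty A (lfApp e e'')
  end.

Definition extOPE {G G' G''} : OPE G' G -> LFExt G' G'' -> OPE G'' G :=
  match G return OPE G' G -> LFExt G' G'' -> OPE G'' G with
  | cnil => fun o lf => lfApp o lf
  | cext G0 A => fun o lf =>
      match o with existT _ G1 (o1, l1) => existT _ G1 (o1, lfApp l1 lf) end
  | clock G0 => fun o lf =>
      match o with existT _ G1 (o1, l1) => existT _ G1 (o1, lfApp l1 lf) end
  end.

Fixpoint lfFactor {X G} (lf : LFExt X G) {struct lf}
  : forall G', OPE G' G -> {X' : Ctx & (OPE X' X * LFExt X' G')%type} :=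
  match lf in LFExt _ Y
        return forall G', OPE G' Y -> {X' : Ctx & (OPE X' X * LFExt X' G')%type} with
  | lf_nil => fun G' o => existT _ G' (o, lf_nil)
  | lf_ty A lf' => fun G' o =>
      match o with existT _ G1 (o1, l1) =>
        match lfFactor lf' G1 o1 with existT _ X' (oX, lX) =>
          existT _ X' (oX, lfApp (lf_ty A lX) l1) end end
  end.

Fixpoint compOPE {G0 : Ctx} {struct G0}
  : forall {G1 G2}, OPE G2 G1 -> OPE G1 G0 -> OPE G2 G0 :=
  match G0 return forall G1 G2, OPE G2 G1 -> OPE G1 G0 -> OPE G2 G0 with
  | cnil => fun G1 G2 o2 o1 =>
      match lfFactor o1 G2 o2 with existT _ X (oX, lX) => lfApp oX lX end
  | cext G0' A => fun G1 G2 o2 o1 =>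
      match o1 with existT _ H (o1', l1) =>
        match lfFactor l1 G2 o2 with existT _ X (oX, lX) =>
          match oX with existT _ H' (oX', lX') =>
            existT _ H' (compOPE oX' o1', lfApp lX' lX) end end end
  | clock G0' => fun G1 G2 o2 o1 =>
      match o1 with existT _ H (o1', l1) =>
        match lfFactor l1 G2 o2 with existT _ X (oX, lX) =>
          match oX with existT _ H' (oX', lX') =>
            existT _ H' (compOPE oX' o1', lfApp lX' lX) end end end
  end.

Lemma dropOPE_extOPE {G G'} (A : Ty) (o : OPE G' G) :
  dropOPE A o = extOPE o (lf_ty A lf_nil).
Proof. destruct G; simpl; auto; destruct o as [G1 [o1 l1]]; reflexivity. Qed.

Lemma extOPE_nil {G G'} (o : OPE G' G) : extOPE o lf_nil = o.
Proof. destruct G; simpl; auto; destruct o as [G1 [o1 l1]]; reflexivity. Qed.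

Lemma extOPE_lfApp {G G' G'' G'''} (o : OPE G' G) (l : LFExt G' G'') (l' : LFExt G'' G''') :
  extOPE (extOPE o l) l' = extOPE o (lfApp l l').
Proof.
  destruct G; simpl; try apply lfext_unique.
  all: destruct o as [G1 [o1 l1]]; existT_pair_congr.
Qed.

Lemma extOPE_cext {G0 A G1 G2 H} (o1 : OPE H G0) (l1 : LFExt (cext H A) G1) (l : LFExt G1 G2) :
  extOPE (G := cext G0 A) (existT _ H (o1, l1)) l = existT _ H (o1, lfApp l1 l).
Proof. reflexivity. Qed.

Lemma extOPE_clock {G0 G1 G2 H} (o1 : OPE H G0) (l1 : LFExt (clock H) G1) (l : LFExt G1 G2) :
  extOPE (G := clock G0) (existT _ H (o1, l1)) l = existT _ H (o1, lfApp l1 l).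
Proof. reflexivity. Qed.

Lemma toOPE_extOPE {D G} (l : LFExt D G) : toOPE l = extOPE (idOPE D) l.
Proof.
  induction l; simpl.
  - symmetry; apply extOPE_nil.
  - rewrite IHl, dropOPE_extOPE, extOPE_lfApp. reflexivity.
Qed.

Lemma lfFactor_id {X G} (l : LFExt X G) : lfFactor l G (idOPE G) = existT _ X (idOPE X, l).
Proof. induction l; simpl; auto. rewrite IHl. reflexivity. Qed.

Lemma lfFactor_ty_extOPE {X G A G' G''} (l : LFExt X G) (o : OPE G' (cext G A))
  (l' : LFExt G' G'') :
  lfFactor (lf_ty A l) G'' (extOPE o l') =
  match lfFactor (lf_ty A l) G' o with existT _ Y (oY, lY) => existT _ Y (oY, lfApp lY l') end.
Proof.
  destruct o as [G1 [o1 l1]]; simpl.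
  destruct (lfFactor l G1 o1) as [Y [oY lY]]. existT_pair_congr.
Qed.

Lemma lfFactor_lfApp {X Y G G'} (l1 : LFExt X Y) (l2 : LFExt Y G) (o : OPE G' G) :
  lfFactor (lfApp l1 l2) G' o =
  match lfFactor l2 G' o with existT _ Z (oZ, lZ) =>
    match lfFactor l1 Z oZ with existT _ W (oW, lW) => existT _ W (oW, lfApp lW lZ) end end.
Proof.
  revert G' o; induction l2; intros G' o; simpl.
  - destruct (lfFactor l1 G' o) as [W [oW lW]]; reflexivity.
  - destruct o as [G1 [o1 m1]]. rewrite IHl2.
    destruct (lfFactor l2 G1 o1) as [Z [oZ lZ]].
    destruct (lfFactor l1 Z oZ) as [W [oW lW]].
    existT_pair_congr.
Qed.

Lemma lfFactor_compOPE {X G G1 G2} (l : LFExt X G) (o2 : OPE G2 G1) (o1 : OPE G1 G) :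
  lfFactor l G2 (compOPE o2 o1) =
  match lfFactor l G1 o1 with existT _ X1 (p1, m1) =>
    match lfFactor m1 G2 o2 with existT _ X2 (p2, m2) =>
      existT _ X2 (compOPE p2 p1, m2) end end.
Proof.
  revert G1 G2 o2 o1; induction l; intros G1 G2 o2 o1; simpl.
  - reflexivity.
  - destruct o1 as [H [o1' l1]]; simpl.
    destruct (lfFactor l1 G2 o2) as [Y [[H' [oY' lY']] lY]] eqn:E1.
    rewrite IHl.
    destruct (lfFactor l H o1') as [Z1 [p1 n1]].
    rewrite lfFactor_lfApp, E1. simpl.
    destruct (lfFactor n1 H' oY') as [Z2 [p2 n2]].
    existT_pair_congr.
Qed.

Lemma compOPE_id_l {G0 G1} (o : OPE G1 G0) : compOPE (idOPE G1) o = o.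
Proof.
  revert G1 o; induction G0; intros G1 o; [apply lfext_unique | ..].
  all: destruct o as [H [o' l]]; simpl; rewrite lfFactor_id; simpl; rewrite IHG0;
    existT_pair_congr.
Qed.

Lemma compOPE_id_r {G0 G2} (o : OPE G2 G0) : compOPE o (idOPE G0) = o.
Proof.
  revert G2 o; induction G0; intros G2 o; [apply lfext_unique | ..].
  all: destruct o as [H [o' l]]; simpl; rewrite IHG0; reflexivity.
Qed.

Lemma compOPE_assoc {G0 G1 G2 G3} (o3 : OPE G3 G2) (o2 : OPE G2 G1) (o1 : OPE G1 G0) :
  compOPE (compOPE o3 o2) o1 = compOPE o3 (compOPE o2 o1).
Proof.
  revert G1 G2 G3 o3 o2 o1; induction G0; intros G1 G2 G3 o3 o2 o1; [apply lfext_unique | ..].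
  all: destruct o1 as [H [o1' l1]]; simpl; rewrite lfFactor_compOPE;
    destruct (lfFactor l1 G2 o2) as [X1 [[H' [p1' q1]] m1]];
    rewrite lfFactor_lfApp;
    destruct (lfFactor m1 G3 o3) as [X2 [p2 m2]]; simpl;
    destruct (lfFactor q1 X2 p2) as [Y [[H'' [r' q']] qY]];
    rewrite IHG0; existT_pair_congr.
Qed.

Lemma compOPE_cext {G0 A G1 G2 H} (o2 : OPE G2 G1) (o1' : OPE H G0)
  (l1 : LFExt (cext H A) G1) :
  compOPE (G0 := cext G0 A) o2 (existT _ H (o1', l1)) =
  match lfFactor l1 G2 o2 with existT _ X (oX, lX) =>
    match oX with existT _ H' (oX', lX') => existT _ H' (compOPE oX' o1', lfApp lX' lX) end end.
Proof. reflexivity. Qed.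

Lemma compOPE_clock {G0 G1 G2 H} (o2 : OPE G2 G1) (o1' : OPE H G0)
  (l1 : LFExt (clock H) G1) :
  compOPE (G0 := clock G0) o2 (existT _ H (o1', l1)) =
  match lfFactor l1 G2 o2 with existT _ X (oX, lX) =>
    match oX with existT _ H' (oX', lX') => existT _ H' (compOPE oX' o1', lfApp lX' lX) end end.
Proof. reflexivity. Qed.

Lemma compOPE_extOPE_l {G0 G1 G2 G3} (o2 : OPE G2 G1) (l : LFExt G2 G3) (o1 : OPE G1 G0) :
  compOPE (extOPE o2 l) o1 = extOPE (compOPE o2 o1) l.
Proof.
  destruct G0; [apply lfext_unique | ..].
  all: destruct o1 as [H [o1' l1]]; rewrite ?compOPE_cext, ?compOPE_clock;
    destruct l1 as [|Gx B l0];
    [ simpl; destruct o2 as [H' [o2' l2']]; simpl; existT_pair_congr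
    | rewrite lfFactor_ty_extOPE;
      destruct (lfFactor (lf_ty B l0) G2 o2) as [X [[H' [oX' lX']] lX]]; simpl;
      existT_pair_congr ].
Qed.

Lemma compOPE_extOPE_r {G0 G1 G1' G2} (o2 : OPE G2 G1') (o1 : OPE G1 G0) (l : LFExt G1 G1') :
  compOPE o2 (extOPE o1 l) =
  match lfFactor l G2 o2 with existT _ X (oX, lX) => extOPE (compOPE oX o1) lX end.
Proof.
  destruct G0; [destruct (lfFactor l G2 o2) as [X [oX lX]]; apply lfext_unique | ..].
  all: destruct o1 as [H [o1' l1]];
    rewrite ?extOPE_cext, ?extOPE_clock, ?compOPE_cext, ?compOPE_clock, lfFactor_lfApp;
    destruct (lfFactor l G2 o2) as [X [oX lX]];
    rewrite ?compOPE_cext, ?compOPE_clock;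
    destruct (lfFactor l1 X oX) as [Y [[H' [oY' lY']] lY]];
    rewrite ?extOPE_cext, ?extOPE_clock; existT_pair_congr.
Qed.

Lemma compOPE_dropOPE_l {G0 G1 G2} A (o2 : OPE G2 G1) (o1 : OPE G1 G0) :
  compOPE (dropOPE A o2) o1 = dropOPE A (compOPE o2 o1).
Proof. rewrite !dropOPE_extOPE, compOPE_extOPE_l. reflexivity. Qed.

Lemma compOPE_keep_drop {G G'} A (o : OPE G' G) :
  compOPE (keepOPE A o) (dropOPE A (idOPE G)) = dropOPE A o.
Proof.
  rewrite (dropOPE_extOPE A (idOPE G)), compOPE_extOPE_r. simpl.
  rewrite compOPE_id_r, dropOPE_extOPE. f_equal; apply lfext_unique.
Qed.

Lemma dropOPE_id_natural {G G'} A (o : OPE G' G) :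
  compOPE (keepOPE A o) (dropOPE A (idOPE G)) = compOPE (dropOPE A (idOPE G')) o.
Proof. rewrite compOPE_keep_drop, compOPE_dropOPE_l, compOPE_id_l. reflexivity. Qed.

Lemma toOPE_lfApp {X Y Z} (l1 : LFExt X Y) (l2 : LFExt Y Z) :
  compOPE (toOPE l2) (toOPE l1) = toOPE (lfApp l1 l2).
Proof. rewrite !toOPE_extOPE, compOPE_extOPE_l, compOPE_id_l, extOPE_lfApp. reflexivity. Qed.

Lemma compOPE_toOPE {X G G'} (l : LFExt X G) (o : OPE G' G) :
  compOPE o (toOPE l) =
  match lfFactor l G' o with existT _ Y (oY, lY) => compOPE (toOPE lY) oY end.
Proof.
  rewrite toOPE_extOPE, compOPE_extOPE_r. destruct (lfFactor l G' o) as [Y [oY lY]].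
  rewrite compOPE_id_r, toOPE_extOPE, compOPE_extOPE_l, compOPE_id_l. reflexivity.
Qed.

Lemma factorOPE_ty {D G0 A G' H} (e : Ext D G0) (o1 : OPE H G0) (l1 : LFExt (cext H A) G') :
  factorOPE (ext_ty A e) G' (existT _ H (o1, l1)) =
  match factorOPE e H o1 with existT _ D' (o2, e2) =>
    existT _ D' (o2, extApp e2 (extApp (ext_ty A ext_nil) (lfToExt l1))) end.
Proof. reflexivity. Qed.

Lemma factorOPE_lk {D G0 G' H} (e : Ext D G0) (o1 : OPE H G0) (l1 : LFExt (clock H) G') :
  factorOPE (ext_lk e) G' (existT _ H (o1, l1)) =
  match factorOPE e H o1 with existT _ D' (o2, e2) =>
    existT _ D' (o2, extApp e2 (extApp (ext_lk ext_nil) (lfToExt l1))) end.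
Proof. reflexivity. Qed.

Lemma factorOPE_id {D G} (e : Ext D G) : factorOPE e G (idOPE G) = existT _ D (idOPE D, e).
Proof. induction e; simpl; [reflexivity | ..]; rewrite IHe; existT_pair_congr. Qed.

Lemma factorOPE_extApp {D G G' G''} (e : Ext D G) (e' : Ext G G') (o : OPE G'' G') :
  factorOPE (extApp e e') G'' o =
  match factorOPE e' G'' o with existT _ D1 (o1, e1) =>
    match factorOPE e D1 o1 with existT _ D2 (o2, e2) => existT _ D2 (o2, extApp e2 e1) end end.
Proof.
  revert G'' o; induction e'; intros G'' o;
    [simpl; destruct (factorOPE e G'' o) as [D2 [o2 e2]]; reflexivity | ..].
  all: destruct o as [H [o1 l1]]; simpl extApp; rewrite ?factorOPE_ty, ?factorOPE_lk, IHe';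
    destruct (factorOPE e' H o1) as [D1 [p1 e1]];
    destruct (factorOPE e D1 p1) as [D2 [p2 e2]]; existT_pair_congr.
Qed.

Lemma factorOPE_lfToExt {X G G'} (l : LFExt X G) (o : OPE G' G) :
  factorOPE (lfToExt l) G' o =
  match lfFactor l G' o with existT _ Y (oY, lY) => existT _ Y (oY, lfToExt lY) end.
Proof.
  revert G' o; induction l; intros G' o; [reflexivity |].
  destruct o as [H [o1 l1]]. simpl lfToExt. rewrite factorOPE_ty, IHl. simpl.
  destruct (lfFactor l H o1) as [Y [oY lY]]. existT_pair_congr.
Qed.

Lemma factorOPE_compOPE {D G G1 G2} (e : Ext D G) (o2 : OPE G2 G1) (o1 : OPE G1 G) :
  factorOPE e G2 (compOPE o2 o1) =
  match factorOPE e G1 o1 with existT _ D1 (p1, e1) =>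
    match factorOPE e1 G2 o2 with existT _ D2 (p2, e2) =>
      existT _ D2 (compOPE p2 p1, e2) end end.
Proof.
  revert G1 G2 o2 o1; induction e; intros G1 G2 o2 o1; [reflexivity | ..].
  all: destruct o1 as [H [o1' l1]]; rewrite ?compOPE_cext, ?compOPE_clock;
    destruct (lfFactor l1 G2 o2) as [X [[H' [oX' lX']] lX]] eqn:E1;
    rewrite ?factorOPE_ty, ?factorOPE_lk, IHe;
    destruct (factorOPE e H o1') as [D1 [p1 e1]].
  - replace (extApp e1 (extApp (ext_ty A ext_nil) (lfToExt l1)))
      with (extApp e1 (lfToExt (lfApp (lf_ty A lf_nil) l1))) by apply ext_unique.
    rewrite factorOPE_extApp, factorOPE_lfToExt, lfFactor_lfApp, E1. simpl.
    destruct (factorOPE e1 H' oX') as [D2 [p2 e2]]. existT_pair_congr.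
  - rewrite !factorOPE_extApp, factorOPE_lfToExt, E1. simpl.
    destruct (factorOPE e1 H' oX') as [D2 [p2 e2]]. existT_pair_congr.
Qed.

Lemma lfVar_lfApp {X Y Z A} (l1 : LFExt X Y) (l2 : LFExt Y Z) (v : Var X A) :
  lfVar (lfApp l1 l2) v = lfVar l2 (lfVar l1 v).
Proof. induction l2; simpl; auto. rewrite IHl2; auto. Qed.

Lemma wkVar_lfVar {X G G' A} (l : LFExt X G) (v : Var X A) (o : OPE G' G) :
  wkVar (lfVar l v) G' o =
  match lfFactor l G' o with existT _ Y (oY, lY) => lfVar lY (wkVar v Y oY) end.
Proof.
  revert G' o; induction l; intros G' o; simpl; [reflexivity |].
  destruct o as [H [o1 l1]]. simpl. rewrite IHl.
  destruct (lfFactor l H o1) as [Y [oY lY]]. rewrite lfVar_lfApp. reflexivity.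
Qed.

Lemma wkVar_id {G A} (v : Var G A) : wkVar v G (idOPE G) = v.
Proof. induction v; simpl; auto. rewrite IHv; auto. Qed.

Lemma wkVar_comp {G G1 G2 A} (v : Var G A) (o1 : OPE G1 G) (o2 : OPE G2 G1) :
  wkVar (wkVar v G1 o1) G2 o2 = wkVar v G2 (compOPE o2 o1).
Proof.
  revert G1 G2 o1 o2; induction v; intros G1 G2 o1 o2.
  all: destruct o1 as [H [o1' l1]]; rewrite compOPE_cext; simpl; rewrite wkVar_lfVar;
    destruct (lfFactor l1 G2 o2) as [X [[H' [oX' lX']] lX]]; simpl;
    rewrite lfVar_lfApp, ?IHv; reflexivity.
Qed.

Lemma wk_id {G A} (t : Tm G A) : wk t G (idOPE G) = t.
Proof.
  induction t; simpl.
  - rewrite wkVar_id; auto.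
  - change (keepOPE A (idOPE G)) with (idOPE (cext G A)). rewrite IHt; auto.
  - rewrite IHt1, IHt2; auto.
  - change (keepLockOPE (idOPE G)) with (idOPE (clock G)). rewrite IHt; auto.
  - rewrite factorOPE_id, IHt. reflexivity.
Qed.

Lemma wk_comp {G G1 G2 A} (t : Tm G A) (o1 : OPE G1 G) (o2 : OPE G2 G1) :
  wk (wk t G1 o1) G2 o2 = wk t G2 (compOPE o2 o1).
Proof.
  revert G1 G2 o1 o2; induction t; intros G1 G2 o1 o2; simpl.
  - rewrite wkVar_comp; auto.
  - rewrite IHt; auto.
  - rewrite IHt1, IHt2; auto.
  - rewrite IHt; auto.
  - rewrite factorOPE_compOPE. destruct (factorOPE e G1 o1) as [D1 [p1 e1]]. simpl.
    destruct (factorOPE e1 G2 o2) as [D2 [p2 e2]]. rewrite IHt. reflexivity.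
Qed.

Lemma wkSub_id {D G} (s : Sub G D) : wkSub D G G (idOPE G) s = s.
Proof.
  revert G s; induction D; intros G s; simpl.
  - destruct s; auto.
  - destruct s as [s u]; simpl. rewrite IHD, wk_id; auto.
  - destruct s as [G1 [s1 e1]]. rewrite factorOPE_id, IHD. reflexivity.
Qed.

Lemma wkSub_comp {D G G1 G2} (s : Sub G D) (o1 : OPE G1 G) (o2 : OPE G2 G1) :
  wkSub D G1 G2 o2 (wkSub D G G1 o1 s) = wkSub D G G2 (compOPE o2 o1) s.
Proof.
  revert G G1 G2 s o1 o2; induction D; intros G G1 G2 s o1 o2; simpl.
  - auto.
  - rewrite IHD, wk_comp; auto.
  - destruct s as [H [s1 e1]]. rewrite factorOPE_compOPE.
    destruct (factorOPE e1 G1 o1) as [D1 [p1 q1]]. simpl.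
    destruct (factorOPE q1 G2 o2) as [D2 [p2 q2]]. rewrite IHD. reflexivity.
Qed.

(** * Substitution calculus *)

Fixpoint lfDrop {X G} (l : LFExt X G) {struct l} : forall Γ, Sub Γ G -> Sub Γ X :=
  match l in LFExt _ Y return forall Γ, Sub Γ Y -> Sub Γ X with
  | lf_nil => fun Γ s => s
  | lf_ty A l' => fun Γ s => lfDrop l' Γ (fst s)
  end.

Fixpoint resSub (D : Ctx) {struct D} : forall D' Γ, OPE D' D -> Sub Γ D' -> Sub Γ D :=
  match D return forall D' Γ, OPE D' D -> Sub Γ D' -> Sub Γ D with
  | cnil => fun _ _ _ _ => tt
  | cext D0 A => fun D' Γ o s =>
      match o with existT _ G1 (o1, l) =>
        (resSub D0 G1 Γ o1 (fst (lfDrop l Γ s)), snd (lfDrop l Γ s)) end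
  | clock D0 => fun D' Γ o s =>
      match o with existT _ G1 (o1, l) =>
        match lfDrop l Γ s with existT _ G' (s', e') =>
          existT _ G' (resSub D0 G1 G' o1 s', e') end end
  end.

Fixpoint compSub (Θ : Ctx) {struct Θ} : forall D Γ, Sub D Θ -> Sub Γ D -> Sub Γ Θ :=
  match Θ return forall D Γ, Sub D Θ -> Sub Γ D -> Sub Γ Θ with
  | cnil => fun _ _ _ _ => tt
  | cext Θ0 A => fun D Γ s τ => (compSub Θ0 D Γ (fst s) τ, subst (snd s) Γ τ)
  | clock Θ0 => fun D Γ s τ =>
      match s with existT _ G1 (s1, e1) =>
        match factorSub e1 Γ τ with existT _ G2 (τ2, e2) =>
          existT _ G2 (compSub Θ0 G1 G2 s1 τ2, e2) end end
  end.

Lemma lfDrop_lfApp {X Y Z Γ} (l1 : LFExt X Y) (l2 : LFExt Y Z) (s : Sub Γ Z) :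
  lfDrop (lfApp l1 l2) Γ s = lfDrop l1 Γ (lfDrop l2 Γ s).
Proof. revert Γ s; induction l2; intros Γ s; simpl; auto. Qed.

Lemma lfDrop_wkSub {X G Γ Γ'} (l : LFExt X G) (s : Sub Γ G) (o : OPE Γ' Γ) :
  lfDrop l Γ' (wkSub G Γ Γ' o s) = wkSub X Γ Γ' o (lfDrop l Γ s).
Proof. revert s; induction l; intros s; simpl; auto. Qed.

Lemma factorSub_extApp {D G G' Γ} (e1 : Ext D G) (e2 : Ext G G') (s : Sub Γ G') :
  factorSub (extApp e1 e2) Γ s =
  match factorSub e2 Γ s with existT _ G1 (s1, x1) =>
    match factorSub e1 G1 s1 with existT _ G2 (s2, x2) => existT _ G2 (s2, extApp x2 x1) end end.
Proof.
  revert Γ s; induction e2; intros Γ s; simpl.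
  - destruct (factorSub e1 Γ s) as [G2 [s2 x2]]; reflexivity.
  - apply IHe2.
  - destruct s as [G1 [s1 x1]]. rewrite IHe2.
    destruct (factorSub e2 G1 s1) as [G3 [s3 x3]]. simpl.
    destruct (factorSub e1 G3 s3) as [G4 [s4 x4]]. existT_pair_congr.
Qed.

Lemma factorSub_lfToExt {X G Γ} (l : LFExt X G) (s : Sub Γ G) :
  factorSub (lfToExt l) Γ s = existT _ Γ (lfDrop l Γ s, ext_nil).
Proof. revert Γ s; induction l; intros Γ s; simpl; auto. Qed.

Lemma factorSub_wkSub {D G Γ Γ'} (e : Ext D G) (s : Sub Γ G) (o : OPE Γ' Γ) :
  factorSub e Γ' (wkSub G Γ Γ' o s) =
  match factorSub e Γ s with existT _ G1 (s1, e1) =>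
    match factorOPE e1 Γ' o with existT _ G2 (o2, e2) =>
      existT _ G2 (wkSub D G1 G2 o2 s1, e2) end end.
Proof.
  revert Γ Γ' s o; induction e; intros Γ Γ' s o; simpl.
  - reflexivity.
  - apply IHe.
  - destruct s as [G1 [s1 e1]].
    destruct (factorOPE e1 Γ' o) as [G2 [o2 e2]] eqn:E1. simpl.
    rewrite IHe.
    destruct (factorSub e G1 s1) as [G3 [s3 e3]].
    rewrite factorOPE_extApp, E1.
    destruct (factorOPE e3 G2 o2) as [G4 [o4 e4]]. reflexivity.
Qed.

Lemma resSub_id {D Γ} (s : Sub Γ D) : resSub D D Γ (idOPE D) s = s.
Proof.
  revert Γ s; induction D; intros Γ s; simpl.
  - destruct s; auto.
  - destruct s; simpl; rewrite IHD; auto.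
  - destruct s as [G' [s' e']]. rewrite IHD. reflexivity.
Qed.

Lemma resSub_extOPE {D D' D'' Γ} (o : OPE D' D) (l : LFExt D' D'') (s : Sub Γ D'') :
  resSub D D'' Γ (extOPE o l) s = resSub D D' Γ o (lfDrop l Γ s).
Proof.
  destruct D; simpl; [reflexivity | ..].
  all: destruct o as [G1 [o1 l1]]; simpl; rewrite lfDrop_lfApp; reflexivity.
Qed.

Lemma resSub_drop {D Γ A} (τ : Sub Γ D) (w : Tm Γ A) :
  resSub D (cext D A) Γ (dropOPE A (idOPE D)) ((τ, w) : Sub Γ (cext D A)) = τ.
Proof. rewrite dropOPE_extOPE, resSub_extOPE. simpl. apply resSub_id. Qed.

Lemma wkSub_resSub {D D' Γ Γ'} (o : OPE D' D) (s : Sub Γ D') (o' : OPE Γ' Γ) :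
  wkSub D Γ Γ' o' (resSub D D' Γ o s) = resSub D D' Γ' o (wkSub D' Γ Γ' o' s).
Proof.
  revert D' Γ Γ' o s o'; induction D; intros D' Γ Γ' o s o'; simpl.
  - reflexivity.
  - destruct o as [G1 [o1 l1]]. simpl. rewrite lfDrop_wkSub. simpl. rewrite IHD. reflexivity.
  - destruct o as [G1 [o1 l1]]. rewrite lfDrop_wkSub.
    destruct (lfDrop l1 Γ s) as [G' [s' e']]. simpl.
    destruct (factorOPE e' Γ' o') as [G2 [o2 e2]]. rewrite IHD. reflexivity.
Qed.

Lemma factorSub_resSub {D G D' Γ} (e : Ext D G) (o : OPE D' G) (s : Sub Γ D') :
  factorSub e Γ (resSub G D' Γ o s) =
  match factorOPE e D' o with existT _ X (o', e') =>
    match factorSub e' Γ s with existT _ G' (s', e'') =>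
      existT _ G' (resSub D X G' o' s', e'') end end.
Proof.
  revert D' Γ o s; induction e; intros D' Γ o s.
  - simpl. destruct (factorSub ext_nil Γ s) eqn:E. simpl in E. inversion E. reflexivity.
  - destruct o as [G1 [o1 l1]]. rewrite factorOPE_ty. simpl factorSub at 1.
    rewrite IHe.
    destruct (factorOPE e G1 o1) as [X [o' e']].
    replace (extApp e' (extApp (ext_ty A ext_nil) (lfToExt l1)))
      with (extApp e' (lfToExt (lfApp (lf_ty A lf_nil) l1))) by apply ext_unique.
    rewrite factorSub_extApp, factorSub_lfToExt, lfDrop_lfApp. simpl.
    destruct (factorSub e' Γ (fst (lfDrop l1 Γ s))) as [G' [s' e'']]. existT_pair_congr.
  - destruct o as [G1 [o1 l1]]. rewrite factorOPE_lk.
    simpl resSub. destruct (lfDrop l1 Γ s) as [G' [s' e']] eqn:E. simpl.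
    rewrite IHe.
    destruct (factorOPE e G1 o1) as [X [o2 e2]].
    rewrite !factorSub_extApp, factorSub_lfToExt, E. simpl.
    destruct (factorSub e2 G' s') as [G3 [s3 e3]]. existT_pair_congr.
Qed.

Lemma factorSub_compSub {D G Δ Γ} (e : Ext D G) (s : Sub Δ G) (τ : Sub Γ Δ) :
  factorSub e Γ (compSub G Δ Γ s τ) =
  match factorSub e Δ s with existT _ G1 (s1, e1) =>
    match factorSub e1 Γ τ with existT _ G2 (τ2, e2) =>
      existT _ G2 (compSub D G1 G2 s1 τ2, e2) end end.
Proof.
  revert Δ Γ s τ; induction e; intros Δ Γ s τ; simpl.
  - reflexivity.
  - apply IHe.
  - destruct s as [G1 [s1 e1]].
    destruct (factorSub e1 Γ τ) as [G2 [τ2 e2]] eqn:E1. simpl.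
    rewrite IHe.
    destruct (factorSub e G1 s1) as [G3 [s3 e3]].
    rewrite factorSub_extApp, E1.
    destruct (factorSub e3 G2 τ2) as [G4 [τ4 e4]]. reflexivity.
Qed.

Lemma substVar_lfVar {X G Γ A} (l : LFExt X G) (v : Var X A) (s : Sub Γ G) :
  substVar (lfVar l v) Γ s = substVar v Γ (lfDrop l Γ s).
Proof. revert s; induction l; intros s; simpl; auto. Qed.

Lemma substVar_wkVar {D D' Γ A} (v : Var D A) (o : OPE D' D) (s : Sub Γ D') :
  substVar (wkVar v D' o) Γ s = substVar v Γ (resSub D D' Γ o s).
Proof.
  revert D' o s; induction v; intros D' o s; destruct o as [G1 [o1 l1]]; simpl;
    rewrite substVar_lfVar; simpl; auto.
Qed.

Lemma substVar_wkSub {D Γ Γ' A} (v : Var D A) (s : Sub Γ D) (o : OPE Γ' Γ) :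
  substVar v Γ' (wkSub D Γ Γ' o s) = wk (substVar v Γ s) Γ' o.
Proof. revert s; induction v; intros s; simpl; auto. Qed.

Lemma subst_wk {D D' Γ A} (t : Tm D A) (o : OPE D' D) (s : Sub Γ D') :
  subst (wk t D' o) Γ s = subst t Γ (resSub D D' Γ o s).
Proof.
  revert D' Γ o s; induction t; intros D' Γ o s; simpl.
  - apply substVar_wkVar.
  - rewrite IHt. simpl. rewrite wkSub_resSub. reflexivity.
  - rewrite IHt1, IHt2; auto.
  - rewrite IHt. reflexivity.
  - rewrite factorSub_resSub. destruct (factorOPE e D' o) as [X [o' e']]. simpl.
    destruct (factorSub e' Γ s) as [G' [s' e'']]. rewrite IHt. reflexivity.
Qed.

Lemma wk_subst {D Γ Γ' A} (t : Tm D A) (s : Sub Γ D) (o : OPE Γ' Γ) :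
  wk (subst t Γ s) Γ' o = subst t Γ' (wkSub D Γ Γ' o s).
Proof.
  revert Γ Γ' s o; induction t; intros Γ Γ' s o; simpl.
  - rewrite substVar_wkSub; auto.
  - rewrite IHt. simpl. rewrite !wkSub_comp, dropOPE_id_natural. reflexivity.
  - rewrite IHt1, IHt2; auto.
  - rewrite IHt. reflexivity.
  - rewrite factorSub_wkSub. destruct (factorSub e Γ s) as [G1 [s1 e1]]. simpl.
    destruct (factorOPE e1 Γ' o) as [G2 [o2 e2]]. rewrite IHt. reflexivity.
Qed.

Lemma compSub_wkSub_l {Θ D D' Γ} (s : Sub D Θ) (o : OPE D' D) (τ : Sub Γ D') :
  compSub Θ D' Γ (wkSub Θ D D' o s) τ = compSub Θ D Γ s (resSub D D' Γ o τ).
Proof.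
  revert D D' Γ s o τ; induction Θ; intros D D' Γ s o τ; simpl.
  - reflexivity.
  - rewrite IHΘ, subst_wk. reflexivity.
  - destruct s as [G1 [s1 e1]].
    rewrite factorSub_resSub.
    destruct (factorOPE e1 D' o) as [G2 [o2 e2]]. simpl.
    destruct (factorSub e2 Γ τ) as [G3 [τ3 e3]]. rewrite IHΘ. reflexivity.
Qed.

Lemma compSub_wkSub_r {Θ D Γ Γ'} (s : Sub D Θ) (τ : Sub Γ D) (o : OPE Γ' Γ) :
  compSub Θ D Γ' s (wkSub D Γ Γ' o τ) = wkSub Θ Γ Γ' o (compSub Θ D Γ s τ).
Proof.
  revert D Γ Γ' s τ o; induction Θ; intros D Γ Γ' s τ o; simpl.
  - reflexivity.
  - rewrite IHΘ, wk_subst. reflexivity.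
  - destruct s as [G1 [s1 e1]].
    rewrite factorSub_wkSub.
    destruct (factorSub e1 Γ τ) as [G2 [τ2 e2]]. simpl.
    destruct (factorOPE e2 Γ' o) as [G3 [o3 e3]]. rewrite IHΘ. reflexivity.
Qed.

Lemma subst_subst {D Δ Γ A} (t : Tm D A) (s : Sub Δ D) (τ : Sub Γ Δ) :
  subst (subst t Δ s) Γ τ = subst t Γ (compSub D Δ Γ s τ).
Proof.
  revert Δ Γ s τ; induction t; intros Δ Γ s τ; simpl.
  - induction v; simpl; auto.
  - rewrite IHt. simpl. rewrite compSub_wkSub_l, resSub_drop, compSub_wkSub_r. reflexivity.
  - rewrite IHt1, IHt2; auto.
  - rewrite IHt. reflexivity.
  - rewrite factorSub_compSub. destruct (factorSub e Δ s) as [G1 [s1 e1]]. simpl.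
    destruct (factorSub e1 Γ τ) as [G2 [τ2 e2]]. rewrite IHt. reflexivity.
Qed.

Lemma lfDrop_idSub {X G} (l : LFExt X G) :
  lfDrop l G (idSub G) = wkSub X X G (toOPE l) (idSub X).
Proof.
  induction l; simpl.
  - rewrite wkSub_id; auto.
  - rewrite lfDrop_wkSub, IHl, wkSub_comp, compOPE_dropOPE_l, compOPE_id_l. reflexivity.
Qed.

Lemma compOPE_cext_dropOPE_id {G0 G1 G' A} (o1 : OPE G1 G0) (l : LFExt (cext G1 A) G') :
  compOPE (G0 := G0) (existT _ G1 (o1, l) : OPE G' (cext G0 A)) (dropOPE A (idOPE G0)) =
  compOPE (compOPE (toOPE l) (dropOPE A (idOPE G1))) o1.
Proof.
  rewrite (dropOPE_extOPE A (idOPE G0)), compOPE_extOPE_r. simpl.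
  rewrite compOPE_id_r, toOPE_extOPE, compOPE_extOPE_l, compOPE_id_l,
    (dropOPE_extOPE A (idOPE G1)), extOPE_lfApp, compOPE_extOPE_l, compOPE_id_l.
  f_equal; apply lfext_unique.
Qed.

Lemma wkSub_idSub {G G'} (o : OPE G' G) :
  wkSub G G G' o (idSub G) = resSub G G' G' o (idSub G').
Proof.
  revert G' o; induction G; intros G' o; simpl.
  - reflexivity.
  - rewrite wkSub_comp. destruct o as [G1 [o1 l]]. rewrite lfDrop_idSub. simpl.
    rewrite (wkSub_comp (D := G1) (idSub G1) (dropOPE t (idOPE G1)) (toOPE l)).
    rewrite <- wkSub_resSub, <- (IHG G1 o1), wkSub_comp, compOPE_cext_dropOPE_id.
    rewrite toOPE_extOPE. simpl. replace (lfApp lf_nil l) with l by apply lfext_unique.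
    reflexivity.
  - destruct o as [G1 [o1 l]]. rewrite lfDrop_idSub, toOPE_extOPE. simpl.
    rewrite wkSub_id, IHG. existT_pair_congr.
Qed.

Lemma factorOPE_ty_toOPE {D G A G'} (e : Ext D G) (l : LFExt (cext G A) G') :
  factorOPE (ext_ty A e) G' (toOPE l) = existT _ D (idOPE D, extApp (ext_ty A e) (lfToExt l)).
Proof. rewrite toOPE_extOPE. simpl. rewrite factorOPE_id. existT_pair_congr. Qed.

Lemma factorOPE_lk_toOPE {D G G'} (e : Ext D G) (l : LFExt (clock G) G') :
  factorOPE (ext_lk e) G' (toOPE l) = existT _ D (idOPE D, extApp (ext_lk e) (lfToExt l)).
Proof. rewrite toOPE_extOPE. simpl. rewrite factorOPE_id. existT_pair_congr. Qed.

Lemma factorSub_idSub {D G} (e : Ext D G) : exists G'' (l : LFExt D G'') (e'' : Ext G'' G),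
  factorSub e G (idSub G) = existT _ G'' (wkSub D D G'' (toOPE l) (idSub D), e'').
Proof.
  induction e as [| G A e IHe | G e IHe].
  - exists D, lf_nil, ext_nil. simpl. rewrite wkSub_id. reflexivity.
  - destruct IHe as [G'' [l [e'' Heq]]]. simpl. rewrite factorSub_wkSub, Heq. clear Heq.
    change (dropOPE A (idOPE G)) with (toOPE (lf_ty A (@lf_nil G))).
    destruct e'' as [| G0 B e0 | G0 e0].
    + exists (cext G'' A), (lf_ty A l), ext_nil. simpl.
      rewrite wkSub_comp, compOPE_dropOPE_l, compOPE_id_l. reflexivity.
    + rewrite factorOPE_ty_toOPE, wkSub_id. eexists _, l, _. reflexivity.
    + rewrite factorOPE_lk_toOPE, wkSub_id. eexists _, l, _. reflexivity.
  - destruct IHe as [G'' [l [e'' Heq]]]. simpl. rewrite Heq.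
    eexists _, l, _. reflexivity.
Qed.

Lemma conv_wk {G A} (t u : Tm G A) :
  conv t u -> forall G' (o : OPE G' G), conv (wk t G' o) (wk u G' o).
Proof.
  intros H; induction H; intros G' o; simpl.
  - apply cv_refl.
  - apply cv_sym; auto.
  - eapply cv_trans; eauto.
  - apply cv_lam; auto.
  - apply cv_app; auto.
  - apply cv_box; auto.
  - destruct (factorOPE e G' o) as [D' [o' e']]. apply cv_unbox; auto.
  - eapply cv_trans; [apply cv_beta_fun |].
    rewrite subst_wk, wk_subst. simpl. rewrite wkSub_idSub. apply cv_refl.
  - eapply cv_trans; [apply cv_eta_fun |].
    rewrite !wk_comp, dropOPE_id_natural. apply cv_refl.
  - rewrite wk_subst. simpl. destruct (factorOPE e G' o) as [D' [o' e']].
    eapply cv_trans; [apply cv_beta_box |].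
    rewrite subst_wk. simpl. rewrite wkSub_idSub. apply cv_refl.
  - apply cv_eta_box.
  - rewrite factorOPE_extApp. destruct (factorOPE e' G' o) as [D1 [o1 e1]].
    rewrite factorOPE_lfToExt, wk_comp, compOPE_toOPE.
    destruct (lfFactor e D1 o1) as [X [oX lX]].
    eapply cv_trans; [apply cv_wk |]. rewrite wk_comp. apply cv_refl.
Qed.

(* At a lock the two substitutions may split the context at different points; these
   differ by a lock-free extension, which [cv_wk] lets us trade for a weakening. *)
Fixpoint convSub (D : Ctx) {struct D} : forall Γ, Sub Γ D -> Sub Γ D -> Prop :=
  match D return forall Γ, Sub Γ D -> Sub Γ D -> Prop with
  | cnil => fun _ _ _ => True
  | cext D0 A => fun Γ s s' => convSub D0 Γ (fst s) (fst s') /\ conv (snd s) (snd s')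
  | clock D0 => fun Γ s s' =>
      match s, s' with existT _ G1 (s1, _), existT _ G2 (s2, _) =>
        exists l : LFExt G2 G1, convSub D0 G1 s1 (wkSub D0 G2 G1 (toOPE l) s2) end
  end.

Lemma convSub_wkSub {D Γ Γ'} (s s' : Sub Γ D) (o : OPE Γ' Γ) :
  convSub D Γ s s' -> convSub D Γ' (wkSub D Γ Γ' o s) (wkSub D Γ Γ' o s').
Proof.
  revert Γ Γ' s s' o; induction D; intros Γ Γ' s s' o H; simpl in *.
  - auto.
  - destruct H; split; auto. apply conv_wk; auto.
  - destruct s as [G1 [s1 e1]], s' as [G2 [s2 e2]], H as [l H].
    rewrite (ext_unique e2 (extApp (lfToExt l) e1)), factorOPE_extApp.
    destruct (factorOPE e1 Γ' o) as [G3 [o3 e3]]. rewrite factorOPE_lfToExt.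
    pose proof (compOPE_toOPE l o3) as Hsq.
    destruct (lfFactor l G3 o3) as [X [oX lX]]. simpl.
    exists lX. rewrite wkSub_comp, <- Hsq, <- wkSub_comp. apply IHD; auto.
Qed.

Lemma factorOPE_toOPE_lfext {D G G'} (e : Ext D G) (l : LFExt G G') :
  match factorOPE e G' (toOPE l) with existT _ D' (o', _) =>
    exists m : LFExt D D', o' = toOPE m end.
Proof.
  destruct e.
  - exists l. reflexivity.
  - rewrite factorOPE_ty_toOPE. exists lf_nil. reflexivity.
  - rewrite factorOPE_lk_toOPE. exists lf_nil. reflexivity.
Qed.

Lemma factorSub_convSub {D Δ Γ} (e : Ext D Δ) (s s' : Sub Γ Δ) : convSub Δ Γ s s' ->
  match factorSub e Γ s, factorSub e Γ s' with
  | existT _ G1 (s1, _), existT _ G2 (s2, _) =>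
      exists l : LFExt G2 G1, convSub D G1 s1 (wkSub D G2 G1 (toOPE l) s2)
  end.
Proof.
  revert Γ s s'; induction e; intros Γ s s' H; simpl in *.
  - exists lf_nil. simpl. rewrite wkSub_id. auto.
  - apply IHe, H.
  - destruct s as [G1 [s1 e1]], s' as [G2 [s2 e2]], H as [l H].
    pose proof (IHe _ _ _ H) as IH. rewrite factorSub_wkSub in IH.
    destruct (factorSub e G1 s1) as [G3 [s3 e3]].
    destruct (factorSub e G2 s2) as [G4 [s4 e4]].
    pose proof (factorOPE_toOPE_lfext e4 l) as Hm.
    destruct (factorOPE e4 G1 (toOPE l)) as [G5 [o5 e5]].
    destruct Hm as [m ->], IH as [l' IH].
    exists (lfApp m l'). rewrite <- toOPE_lfApp, <- wkSub_comp. auto.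
Qed.

Lemma conv_subst {D Γ A} (t : Tm D A) (s s' : Sub Γ D) :
  convSub D Γ s s' -> conv (subst t Γ s) (subst t Γ s').
Proof.
  revert Γ s s'; induction t; intros Γ s s' H; simpl.
  - induction v; simpl in *; [apply H | apply IHv, H].
  - apply cv_lam, IHt. simpl. split; [apply convSub_wkSub; auto | apply cv_refl].
  - apply cv_app; auto.
  - apply cv_box, IHt. simpl. exists lf_nil. simpl. rewrite wkSub_id. auto.
  - pose proof (factorSub_convSub e s s' H) as He.
    destruct (factorSub e Γ s) as [G1 [s1 e1]].
    destruct (factorSub e Γ s') as [G2 [s2 e2]].
    destruct He as [l He].
    rewrite (ext_unique e2 (extApp (lfToExt l) e1)).
    eapply cv_trans; [| apply cv_sym, cv_wk].
    rewrite wk_subst. apply cv_unbox, IHt. auto.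
Qed.

Lemma wkVar_dropOPE_id {G A} B (v : Var G A) :
  wkVar v (cext G B) (dropOPE B (idOPE G)) = vs B v.
Proof. destruct v; simpl; auto. rewrite wkVar_id. auto. Qed.

Lemma substVar_idSub {G A} (v : Var G A) : substVar v G (idSub G) = var v.
Proof.
  induction v; simpl; auto.
  rewrite substVar_wkSub, IHv. simpl. rewrite wkVar_dropOPE_id. auto.
Qed.

Lemma subst_resSub_idSub {G G' A} (t : Tm G A) (o : OPE G' G) :
  conv (subst t G' (resSub G G' G' o (idSub G'))) (wk t G' o).
Proof.
  revert G' o; induction t; intros G' o; simpl.
  - rewrite <- substVar_wkVar, substVar_idSub. apply cv_refl.
  - apply cv_lam. rewrite wkSub_resSub. apply (IHt _ (keepOPE A o)).
  - apply cv_app; auto.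
  - apply cv_box, (IHt _ (keepLockOPE o)).
  - rewrite factorSub_resSub. destruct (factorOPE e G' o) as [D' [o' e']].
    destruct (factorSub_idSub e') as [G'' [l [e'' ->]]].
    rewrite <- wkSub_resSub, <- wk_subst, (ext_unique e' (extApp (lfToExt l) e'')).
    eapply cv_trans; [| apply cv_sym, cv_wk].
    apply cv_unbox, conv_wk, IHt.
Qed.

Lemma convSub_compSub_resSub_idSub {Θ D Γ} (s : Sub D Θ) (o : OPE Γ D) :
  convSub Θ Γ (compSub Θ D Γ s (resSub D Γ Γ o (idSub Γ))) (wkSub Θ D Γ o s).
Proof.
  revert D Γ s o; induction Θ; intros D Γ s o; simpl.
  - auto.
  - split; auto. apply subst_resSub_idSub.
  - destruct s as [G1 [s1 e1]].
    rewrite factorSub_resSub. destruct (factorOPE e1 Γ o) as [D' [o' e']].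
    destruct (factorSub_idSub e') as [G'' [l [e'' ->]]].
    exists l. rewrite <- wkSub_resSub, compSub_wkSub_r. apply convSub_wkSub, IHΘ.
Qed.

(** * The presheaf model *)

Record Psh : Type := mkPsh {
  PF : Ctx -> Type;
  pact : forall {Γ Γ'}, OPE Γ' Γ -> PF Γ -> PF Γ';
  pact_id : forall Γ x, pact (idOPE Γ) x = x;
  pact_comp : forall Γ Γ' Γ'' (o1 : OPE Γ' Γ) (o2 : OPE Γ'' Γ') x,
      pact (compOPE o2 o1) x = pact o2 (pact o1 x) }.
Arguments pact {p Γ Γ'} o x.

Definition PHom (P Q : Psh) : Type :=
  { f : forall Γ, PF P Γ -> PF Q Γ |
    forall Γ Γ' (o : OPE Γ' Γ) x, f Γ' (pact o x) = pact o (f Γ x) }.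

Definition ap {P Q} (f : PHom P Q) {Γ} (x : PF P Γ) : PF Q Γ := proj1_sig f Γ x.

Lemma ap_nat {P Q} (f : PHom P Q) {Γ Γ'} (o : OPE Γ' Γ) x :
  ap f (pact o x) = pact o (ap f x).
Proof. apply (proj2_sig f). Qed.

Lemma hom_ext {P Q} (f g : PHom P Q) : (forall Γ x, ap f (Γ := Γ) x = ap g x) -> f = g.
Proof.
  intros H. apply eq_sig_hprop; [intros; apply proof_irrelevance |].
  do 2 (apply functional_extensionality_dep; intro). apply H.
Qed.

Definition Pid (P : Psh) : PHom P P.
Proof. refine (exist _ (fun Γ x => x) _). abstract (intros; reflexivity). Defined.

Definition Pcomp {P Q R : Psh} (g : PHom Q R) (f : PHom P Q) : PHom P R.
Proof.
  refine (exist _ (fun Γ x => ap g (ap f x)) _).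
  abstract (intros; rewrite !ap_nat; reflexivity).
Defined.

Definition PI : Psh.
Proof.
  refine (mkPsh (fun Γ => Tm Γ iota) (fun Γ Γ' o t => wk t Γ' o) _ _).
  - abstract (intros; apply wk_id).
  - abstract (intros; symmetry; apply wk_comp).
Defined.

Definition Pone : Psh.
Proof.
  refine (mkPsh (fun _ => unit) (fun _ _ _ x => x) _ _); abstract (intros; reflexivity).
Defined.

Definition Pprod (P Q : Psh) : Psh.
Proof.
  refine (mkPsh (fun Γ => (PF P Γ * PF Q Γ)%type)
                (fun Γ Γ' o x => (pact o (fst x), pact o (snd x))) _ _).
  - abstract (intros Γ [a b]; simpl; rewrite !pact_id; reflexivity).
  - abstract (intros Γ Γ' Γ'' o1 o2 [a b]; simpl; rewrite !pact_comp; reflexivity).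
Defined.

Definition ExpEl (P Q : Psh) (Γ : Ctx) : Type :=
  { f : forall Γ', OPE Γ' Γ -> PF P Γ' -> PF Q Γ' |
    forall Γ' Γ'' (o : OPE Γ' Γ) (o' : OPE Γ'' Γ') p,
      pact o' (f Γ' o p) = f Γ'' (compOPE o' o) (pact o' p) }.

Definition expAp {P Q Γ} (f : ExpEl P Q Γ) {Γ'} (o : OPE Γ' Γ) (p : PF P Γ') : PF Q Γ' :=
  proj1_sig f Γ' o p.

Lemma expAp_nat {P Q Γ} (f : ExpEl P Q Γ) {Γ' Γ''} (o : OPE Γ' Γ) (o' : OPE Γ'' Γ') p :
  pact o' (expAp f o p) = expAp f (compOPE o' o) (pact o' p).
Proof. apply (proj2_sig f). Qed.

Lemma exp_ext {P Q Γ} (f g : ExpEl P Q Γ) :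
  (forall Γ' (o : OPE Γ' Γ) p, expAp f o p = expAp g o p) -> f = g.
Proof.
  intros H. apply eq_sig_hprop; [intros; apply proof_irrelevance |].
  do 3 (apply functional_extensionality_dep; intro). apply H.
Qed.

Definition expAct {P Q Γ Γ1} (o1 : OPE Γ1 Γ) (f : ExpEl P Q Γ) : ExpEl P Q Γ1.
Proof.
  refine (exist _ (fun Γ' o p => expAp f (compOPE o o1) p) _).
  abstract (intros; rewrite expAp_nat, compOPE_assoc; reflexivity).
Defined.

Definition Pexp (P Q : Psh) : Psh.
Proof.
  refine (mkPsh (ExpEl P Q) (fun Γ Γ1 o1 f => expAct o1 f) _ _).
  - abstract (intros; apply exp_ext; intros; unfold expAp; simpl;
      rewrite compOPE_id_r; reflexivity).
  - abstract (intros; apply exp_ext; intros; unfold expAp; simpl;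
      rewrite compOPE_assoc; reflexivity).
Defined.

Definition BoxEl (P : Psh) (Γ : Ctx) : Type :=
  { h : forall Γ' (o : OPE Γ' Γ) Δ (e : Ext Γ' Δ), PF P Δ |
    forall Γ' o Δ e Δ' (o' : OPE Δ' Δ),
      pact o' (h Γ' o Δ e) =
      match factorOPE e Δ' o' with existT _ Γ'' (o2, e2) => h Γ'' (compOPE o2 o) Δ' e2 end }.

Definition boxAp {P Γ} (h : BoxEl P Γ) {Γ'} (o : OPE Γ' Γ) {Δ} (e : Ext Γ' Δ) : PF P Δ :=
  proj1_sig h Γ' o Δ e.

Lemma boxAp_nat {P Γ} (h : BoxEl P Γ) {Γ'} (o : OPE Γ' Γ) {Δ} (e : Ext Γ' Δ) {Δ'}
  (o' : OPE Δ' Δ) :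
  pact o' (boxAp h o e) =
  match factorOPE e Δ' o' with existT _ Γ'' (o2, e2) => boxAp h (compOPE o2 o) e2 end.
Proof. apply (proj2_sig h). Qed.

Lemma box_ext {P Γ} (f g : BoxEl P Γ) :
  (forall Γ' (o : OPE Γ' Γ) Δ (e : Ext Γ' Δ), boxAp f o e = boxAp g o e) -> f = g.
Proof.
  intros H. apply eq_sig_hprop; [intros; apply proof_irrelevance |].
  do 4 (apply functional_extensionality_dep; intro). apply H.
Qed.

Definition boxAct {P Γ Γ1} (o1 : OPE Γ1 Γ) (h : BoxEl P Γ) : BoxEl P Γ1.
Proof.
  refine (exist _ (fun Γ' o Δ e => boxAp h (compOPE o o1) e) _).
  abstract (intros; rewrite boxAp_nat; destruct (factorOPE e Δ' o') as [G2 [o2 e2]];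
            rewrite compOPE_assoc; reflexivity).
Defined.

Definition Pbox (P : Psh) : Psh.
Proof.
  refine (mkPsh (BoxEl P) (fun Γ Γ1 o1 h => boxAct o1 h) _ _).
  - abstract (intros; apply box_ext; intros; unfold boxAp; simpl;
      rewrite compOPE_id_r; reflexivity).
  - abstract (intros; apply box_ext; intros; unfold boxAp; simpl;
      rewrite compOPE_assoc; reflexivity).
Defined.

Definition LockEl (P : Psh) (Γ : Ctx) : Type := { Δ : Ctx & (PF P Δ * Ext Δ Γ)%type }.

Definition lockAct {P Γ Γ'} (o : OPE Γ' Γ) (d : LockEl P Γ) : LockEl P Γ' :=
  match d with existT _ Δ (p, e) =>
    match factorOPE e Γ' o with existT _ D' (o2, e2) => existT _ D' (pact o2 p, e2) end end.

Definition Plock (P : Psh) : Psh.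
Proof.
  refine (mkPsh (LockEl P) (fun Γ Γ' o d => lockAct o d) _ _).
  - abstract (intros Γ [Δ [p e]]; unfold lockAct; rewrite factorOPE_id, pact_id; reflexivity).
  - abstract (intros Γ Γ' Γ'' o1 o2 [Δ [p e]]; unfold lockAct; rewrite factorOPE_compOPE;
      destruct (factorOPE e Γ' o1) as [D1 [p1 e1]];
      destruct (factorOPE e1 Γ'' o2) as [D2 [p2 e2]]; rewrite pact_comp; reflexivity).
Defined.

Lemma pact_Pprod {P Q Γ Γ'} (o : OPE Γ' Γ) (x : PF (Pprod P Q) Γ) :
  pact o x = ((pact o (fst x), pact o (snd x)) : PF (Pprod P Q) Γ').
Proof. reflexivity. Qed.

Lemma pact_Pexp {P Q Γ Γ'} (o : OPE Γ' Γ) (f : PF (Pexp P Q) Γ) :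
  pact o f = (expAct o f : PF (Pexp P Q) Γ').
Proof. reflexivity. Qed.

Lemma pact_Pbox {P Γ Γ'} (o : OPE Γ' Γ) (h : PF (Pbox P) Γ) :
  pact o h = (boxAct o h : PF (Pbox P) Γ').
Proof. reflexivity. Qed.

Lemma pact_Plock {P Γ Γ'} (o : OPE Γ' Γ) (d : PF (Plock P) Γ) :
  pact o d = (lockAct o d : PF (Plock P) Γ').
Proof. reflexivity. Qed.

Lemma expAp_act {P Q Γ Γ1 Γ'} (o1 : OPE Γ1 Γ) (f : ExpEl P Q Γ) (o : OPE Γ' Γ1) p :
  expAp (expAct o1 f) o p = expAp f (compOPE o o1) p.
Proof. reflexivity. Qed.

Lemma boxAp_act {P Γ Γ1 Γ' Δ} (o1 : OPE Γ1 Γ) (h : BoxEl P Γ) (o : OPE Γ' Γ1)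
  (e : Ext Γ' Δ) :
  boxAp (boxAct o1 h) o e = boxAp h (compOPE o o1) e.
Proof. reflexivity. Qed.

Definition Pbang (P : Psh) : PHom P Pone.
Proof. refine (exist _ (fun _ _ => tt) _). abstract (intros; reflexivity). Defined.

Definition Ppi1 {P Q : Psh} : PHom (Pprod P Q) P.
Proof. refine (exist _ (fun Γ x => fst x) _). abstract (intros; reflexivity). Defined.

Definition Ppi2 {P Q : Psh} : PHom (Pprod P Q) Q.
Proof. refine (exist _ (fun Γ x => snd x) _). abstract (intros; reflexivity). Defined.

Definition Ppair {P Q R : Psh} (f : PHom R P) (g : PHom R Q) : PHom R (Pprod P Q).
Proof.
  refine (exist _ (fun Γ x => (ap f x, ap g x)) _).
  abstract (intros; rewrite pact_Pprod; cbn [fst snd]; rewrite !ap_nat; reflexivity).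
Defined.

Definition Pev {P Q : Psh} : PHom (Pprod (Pexp P Q) P) Q.
Proof.
  refine (exist _ (fun Γ x => expAp (fst x) (idOPE Γ) (snd x)) _).
  abstract (intros Γ Γ' o [f p]; rewrite pact_Pprod; cbn [fst snd];
    rewrite pact_Pexp, expAp_act, expAp_nat, compOPE_id_l, compOPE_id_r; reflexivity).
Defined.

Definition curEl {P Q R : Psh} (g : PHom (Pprod R P) Q) {Γ} (z : PF R Γ) : ExpEl P Q Γ.
Proof.
  refine (exist _ (fun Γ' o p => ap g ((pact o z, p) : PF (Pprod R P) Γ')) _).
  abstract (intros; rewrite <- ap_nat, pact_Pprod; simpl; rewrite pact_comp; reflexivity).
Defined.

Definition Pcur {P Q R : Psh} (g : PHom (Pprod R P) Q) : PHom R (Pexp P Q).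
Proof.
  refine (exist _ (fun Γ z => curEl g z) _).
  abstract (intros; rewrite pact_Pexp; apply exp_ext; intros;
    rewrite expAp_act; unfold expAp; simpl; rewrite pact_comp; reflexivity).
Defined.

Definition bmapEl {P Q : Psh} (f : PHom P Q) {Γ} (h : BoxEl P Γ) : BoxEl Q Γ.
Proof.
  refine (exist _ (fun Γ' o Δ e => ap f (boxAp h o e)) _).
  abstract (intros; rewrite <- ap_nat, boxAp_nat;
    destruct (factorOPE e Δ' o') as [G2 [o2 e2]]; reflexivity).
Defined.

Definition Pbmap {P Q : Psh} (f : PHom P Q) : PHom (Pbox P) (Pbox Q).
Proof.
  refine (exist _ (fun Γ h => bmapEl f h) _).
  abstract (intros; rewrite !pact_Pbox; apply box_ext; intros; reflexivity).
Defined.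

Definition Pbeps (P : Psh) : PHom (Pbox P) P.
Proof.
  refine (exist _ (fun Γ h => boxAp h (idOPE Γ) ext_nil) _).
  abstract (intros Γ Γ' o h; rewrite pact_Pbox, boxAp_act, boxAp_nat; simpl;
    rewrite compOPE_id_l, compOPE_id_r; reflexivity).
Defined.

Definition innerEl {P Γ Γ' Δ} (h : BoxEl P Γ) (o : OPE Γ' Γ) (e : Ext Γ' Δ) : BoxEl P Δ.
Proof.
  refine (exist _ (fun Δ1 o1 Δ2 e2 =>
    match factorOPE e Δ1 o1 with existT _ Γ2 (o2, e3) =>
      boxAp h (compOPE o2 o) (extApp e3 e2) end) _).
  abstract (intros Δ1 o1 Δ2 e2 Δ' o';
    destruct (factorOPE e Δ1 o1) as [Γ2 [o2 e3]] eqn:E;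
    rewrite boxAp_nat, factorOPE_extApp;
    destruct (factorOPE e2 Δ' o') as [Δ1' [q1 e4]];
    rewrite factorOPE_compOPE, E;
    destruct (factorOPE e3 Δ1' q1) as [Γ4 [o4 e5]];
    rewrite compOPE_assoc; reflexivity).
Defined.

Lemma boxAp_inner {P Γ Γ' Δ Δ1 Δ2} (h : BoxEl P Γ) (o : OPE Γ' Γ) (e : Ext Γ' Δ)
  (o1 : OPE Δ1 Δ) (e2 : Ext Δ1 Δ2) :
  boxAp (innerEl h o e) o1 e2 =
  match factorOPE e Δ1 o1 with existT _ Γ2 (o2, e3) =>
    boxAp h (compOPE o2 o) (extApp e3 e2) end.
Proof. reflexivity. Qed.

Definition deltaEl {P Γ} (h : BoxEl P Γ) : BoxEl (Pbox P) Γ.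
Proof.
  refine (exist _ (fun Γ' o Δ e => (innerEl h o e : PF (Pbox P) Δ)) _).
  abstract (intros Γ' o Δ e Δ' o';
    destruct (factorOPE e Δ' o') as [Γ2 [o2 e2]] eqn:E;
    rewrite pact_Pbox; apply box_ext; intros Δ1 o1 Δ2 e3;
    rewrite boxAp_act, !boxAp_inner, factorOPE_compOPE, E;
    destruct (factorOPE e2 Δ1 o1) as [Γ3 [o3 e4]];
    rewrite compOPE_assoc; reflexivity).
Defined.

Lemma boxAp_delta {P Γ Γ' Δ} (h : BoxEl P Γ) (o : OPE Γ' Γ) (e : Ext Γ' Δ) :
  boxAp (deltaEl h) o e = innerEl h o e.
Proof. reflexivity. Qed.

Definition Pbdelta (P : Psh) : PHom (Pbox P) (Pbox (Pbox P)).
Proof.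
  refine (exist _ (fun Γ h => deltaEl h) _).
  abstract (intros Γ Γ' o h; rewrite !pact_Pbox; apply box_ext; intros Γ1 o1 Δ e;
    rewrite boxAp_act, !boxAp_delta; apply box_ext; intros Δ1 o2 Δ2 e2;
    rewrite !boxAp_inner; destruct (factorOPE e Δ1 o2) as [Γ3 [o3 e3]];
    rewrite boxAp_act, compOPE_assoc; reflexivity).
Defined.

Definition Plmap {P Q : Psh} (f : PHom P Q) : PHom (Plock P) (Plock Q).
Proof.
  refine (exist _ (fun Γ d => match d with existT _ Δ (p, e) => existT _ Δ (ap f p, e) end) _).
  abstract (intros Γ Γ' o [Δ [p e]]; rewrite !pact_Plock; unfold lockAct;
    destruct (factorOPE e Γ' o) as [D' [o2 e2]]; rewrite ap_nat; reflexivity).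
Defined.

Definition aunitEl {P : Psh} {Γ} (p : PF P Γ) : BoxEl (Plock P) Γ.
Proof.
  refine (exist _ (fun Γ' o Δ e => (existT _ Γ' (pact o p, e) : PF (Plock P) Δ)) _).
  abstract (intros; rewrite pact_Plock; unfold lockAct;
    destruct (factorOPE e Δ' o') as [D' [o2 e2]]; rewrite pact_comp; reflexivity).
Defined.

Definition Paunit (P : Psh) : PHom P (Pbox (Plock P)).
Proof.
  refine (exist _ (fun Γ p => aunitEl p) _).
  abstract (intros; rewrite pact_Pbox; apply box_ext; intros;
    rewrite boxAp_act; unfold boxAp; simpl; rewrite pact_comp; reflexivity).
Defined.

Definition Pacounit (P : Psh) : PHom (Plock (Pbox P)) P.
Proof.
  refine (exist _ (fun Γ d => match d with existT _ Δ (h, e) => boxAp h (idOPE Δ) e end) _).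
  abstract (intros Γ Γ' o [Δ [h e]]; rewrite pact_Plock; unfold lockAct; rewrite boxAp_nat;
    destruct (factorOPE e Γ' o) as [D' [o2 e2]];
    rewrite pact_Pbox, boxAp_act, compOPE_id_l, compOPE_id_r; reflexivity).
Defined.

Ltac hom_ext_intros := apply hom_ext; intros.

Lemma Pcomp_id_l {X Y} (f : PHom X Y) : Pcomp (Pid Y) f = f.
Proof. hom_ext_intros; reflexivity. Qed.

Lemma Pcomp_id_r {X Y} (f : PHom X Y) : Pcomp f (Pid X) = f.
Proof. hom_ext_intros; reflexivity. Qed.

Lemma Pcomp_assoc {X Y Z W} (f : PHom X Y) (g : PHom Y Z) (h : PHom Z W) :
  Pcomp h (Pcomp g f) = Pcomp (Pcomp h g) f.
Proof. hom_ext_intros; reflexivity. Qed.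

Lemma Pbang_uniq {X} (f : PHom X Pone) : f = Pbang X.
Proof. hom_ext_intros. destruct (ap f x). reflexivity. Qed.

Lemma Ppi1_pair {X Y Z} (f : PHom Z X) (g : PHom Z Y) : Pcomp Ppi1 (Ppair f g) = f.
Proof. hom_ext_intros; reflexivity. Qed.

Lemma Ppi2_pair {X Y Z} (f : PHom Z X) (g : PHom Z Y) : Pcomp Ppi2 (Ppair f g) = g.
Proof. hom_ext_intros; reflexivity. Qed.

Lemma Ppair_uniq {X Y Z} (h : PHom Z (Pprod X Y)) : h = Ppair (Pcomp Ppi1 h) (Pcomp Ppi2 h).
Proof. hom_ext_intros. unfold ap at 2. simpl. destruct (ap h x). reflexivity. Qed.

Lemma Pev_cur {X Y Z} (f : PHom (Pprod Z X) Y) :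
  Pcomp Pev (Ppair (Pcomp (Pcur f) Ppi1) Ppi2) = f.
Proof.
  hom_ext_intros. destruct x as [z p]. unfold ap at 1. simpl. unfold expAp; simpl.
  rewrite pact_id. reflexivity.
Qed.
Lemma Pcur_uniq {X Y Z} (g : PHom Z (Pexp X Y)) :
  Pcur (Pcomp Pev (Ppair (Pcomp g Ppi1) Ppi2)) = g.
Proof.
  hom_ext_intros. apply exp_ext. intros Γ' o p. unfold ap at 1. simpl. unfold expAp at 1. simpl.
  change (proj1_sig (ap g (pact o x)) Γ' (idOPE Γ') p)
    with (expAp (ap g (pact o x)) (idOPE Γ') p).
  rewrite ap_nat, pact_Pexp, expAp_act, compOPE_id_l. reflexivity.
Qed.

Lemma Pbmap_id {X} : Pbmap (Pid X) = Pid (Pbox X).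
Proof. hom_ext_intros. apply box_ext. reflexivity. Qed.

Lemma Pbmap_comp {X Y Z} (f : PHom X Y) (g : PHom Y Z) :
  Pbmap (Pcomp g f) = Pcomp (Pbmap g) (Pbmap f).
Proof. hom_ext_intros. apply box_ext. reflexivity. Qed.

Lemma Pbeps_nat {X Y} (f : PHom X Y) : Pcomp (Pbeps Y) (Pbmap f) = Pcomp f (Pbeps X).
Proof. hom_ext_intros. reflexivity. Qed.

Lemma Pbdelta_nat {X Y} (f : PHom X Y) :
  Pcomp (Pbdelta Y) (Pbmap f) = Pcomp (Pbmap (Pbmap f)) (Pbdelta X).
Proof.
  hom_ext_intros. apply box_ext. intros Γ' o Δ e. apply box_ext. intros Δ1 o1 Δ2 e2.
  unfold ap; simpl. destruct (factorOPE e Δ1 o1) as [G2 [o2 e3]]. reflexivity.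
Qed.

Lemma Pcomonad_l {X} : Pcomp (Pbeps (Pbox X)) (Pbdelta X) = Pid (Pbox X).
Proof.
  hom_ext_intros. apply box_ext. intros Γ' o Δ e. unfold ap; simpl.
  rewrite compOPE_id_r. f_equal. apply ext_unique.
Qed.

Lemma Pcomonad_r {X} : Pcomp (Pbmap (Pbeps X)) (Pbdelta X) = Pid (Pbox X).
Proof.
  hom_ext_intros. apply box_ext. intros Γ' o Δ e. unfold ap; simpl.
  rewrite factorOPE_id, compOPE_id_l. reflexivity.
Qed.

Lemma Pcomonad_assoc {X} :
  Pcomp (Pbdelta (Pbox X)) (Pbdelta X) = Pcomp (Pbmap (Pbdelta X)) (Pbdelta X).
Proof.
  hom_ext_intros. apply box_ext. intros Γ' o Δ e. unfold ap; simpl.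
  apply box_ext. intros Δ1 o1 Δ2 e1.
  rewrite boxAp_inner, boxAp_delta.
  destruct (factorOPE e Δ1 o1) as [Γ2 [o2 e3]] eqn:E.
  apply box_ext. intros Δ3 o3 Δ4 e2.
  rewrite boxAp_delta, !boxAp_inner, factorOPE_extApp.
  destruct (factorOPE e1 Δ3 o3) as [Δ5 [q e5]].
  rewrite boxAp_inner, factorOPE_compOPE, E.
  destruct (factorOPE e3 Δ5 q) as [Γ4 [o4 e4]].
  rewrite compOPE_assoc. f_equal. apply ext_unique.
Qed.

Lemma Plmap_id {X} : Plmap (Pid X) = Pid (Plock X).
Proof. hom_ext_intros. destruct x as [Δ [p e]]. reflexivity. Qed.

Lemma Plmap_comp {X Y Z} (f : PHom X Y) (g : PHom Y Z) :
  Plmap (Pcomp g f) = Pcomp (Plmap g) (Plmap f).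
Proof. hom_ext_intros. destruct x as [Δ [p e]]. reflexivity. Qed.

Lemma Paunit_nat {X Y} (f : PHom X Y) :
  Pcomp (Paunit Y) f = Pcomp (Pbmap (Plmap f)) (Paunit X).
Proof.
  hom_ext_intros. apply box_ext. intros. unfold ap, boxAp; simpl.
  rewrite <- ap_nat. reflexivity.
Qed.

Lemma Pacounit_nat {X Y} (f : PHom X Y) :
  Pcomp (Pacounit Y) (Plmap (Pbmap f)) = Pcomp f (Pacounit X).
Proof. hom_ext_intros. destruct x as [Δ [h e]]. reflexivity. Qed.

Lemma Ptriangle_l {X} : Pcomp (Pacounit (Plock X)) (Plmap (Paunit X)) = Pid (Plock X).
Proof.
  hom_ext_intros. destruct x as [Δ [p e]]. unfold ap, boxAp; simpl.
  rewrite pact_id. reflexivity.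
Qed.

Lemma Ptriangle_r {X} : Pcomp (Pbmap (Pacounit X)) (Paunit (Pbox X)) = Pid (Pbox X).
Proof.
  hom_ext_intros. apply box_ext. intros. unfold ap; simpl. unfold boxAp at 1 2; simpl.
  rewrite compOPE_id_l. reflexivity.
Qed.

Definition PModel : Model :=
  {| Ob := Psh; Hom := PHom; idm := Pid; comp := fun X Y Z g f => Pcomp g f;
     comp_id_l := fun X Y f => Pcomp_id_l f; comp_id_r := fun X Y f => Pcomp_id_r f;
     comp_assoc := fun X Y Z W f g h => Pcomp_assoc f g h;
     one := Pone; bang := Pbang; bang_uniq := fun X f => Pbang_uniq f;
     prod := Pprod; pi1 := fun X Y => Ppi1; pi2 := fun X Y => Ppi2;
     pair := fun X Y Z f g => Ppair f g;
     pi1_pair := fun X Y Z f g => Ppi1_pair f g; pi2_pair := fun X Y Z f g => Ppi2_pair f g;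
     pair_uniq := fun X Y Z h => Ppair_uniq h;
     exp := Pexp; ev := fun X Y => Pev; cur := fun X Y Z f => Pcur f;
     ev_cur := fun X Y Z f => Pev_cur f; cur_uniq := fun X Y Z g => Pcur_uniq g;
     Bx := Pbox; bmap := fun X Y f => Pbmap f; bmap_id := fun X => Pbmap_id;
     bmap_comp := fun X Y Z f g => Pbmap_comp f g;
     beps := Pbeps; beps_nat := fun X Y f => Pbeps_nat f;
     bdelta := Pbdelta; bdelta_nat := fun X Y f => Pbdelta_nat f;
     comonad_l := fun X => Pcomonad_l; comonad_r := fun X => Pcomonad_r;
     comonad_assoc := fun X => Pcomonad_assoc;
     Lk := Plock; lmap := fun X Y f => Plmap f; lmap_id := fun X => Plmap_id;
     lmap_comp := fun X Y Z f g => Plmap_comp f g;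
     aunit := Paunit; acounit := Pacounit;
     aunit_nat := fun X Y f => Paunit_nat f; acounit_nat := fun X Y f => Pacounit_nat f;
     triangle_l := fun X => Ptriangle_l; triangle_r := fun X => Ptriangle_r |}.

(** * Normalisation by evaluation *)

Notation PTy A := (semTy PModel PI A).
Notation PCtx G := (semCtx PModel PI G).

Record ReifyReflect (A : Ty) : Type := mkReifyReflect {
  reify : forall Γ, PF (PTy A) Γ -> Tm Γ A;
  reflect : forall Γ, Tm Γ A -> PF (PTy A) Γ;
  reify_nat : forall Γ Γ' (o : OPE Γ' Γ) x,
      reify Γ' (pact o x) = wk (reify Γ x) Γ' o;
  reflect_nat : forall Γ Γ' (o : OPE Γ' Γ) t,
      reflect Γ' (wk t Γ' o) = pact o (reflect Γ t) }.
Arguments reify {A} r {Γ} x.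
Arguments reflect {A} r {Γ} t.

Lemma wk_unbox {D G G' A} (t : Tm D (box A)) (e : Ext D G) (o : OPE G' G) :
  wk (unbox t e) G' o =
  match factorOPE e G' o with existT _ D' (o', e') => unbox (wk t D' o') e' end.
Proof. reflexivity. Qed.

Definition reifyReflect_iota : ReifyReflect iota.
Proof.
  refine (mkReifyReflect iota (fun Γ x => x) (fun Γ t => t) _ _);
    abstract (intros; reflexivity).
Defined.

Definition reflectArr {A B} (ra : ReifyReflect A) (rb : ReifyReflect B) {Γ}
  (t : Tm Γ (arr A B)) : ExpEl (PTy A) (PTy B) Γ.
Proof.
  refine (exist _ (fun Γ' o a => reflect rb (app (wk t Γ' o) (reify ra a))) _).
  abstract (intros; rewrite <- reflect_nat; simpl; rewrite wk_comp, <- reify_nat; reflexivity).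
Defined.

Definition reifyReflect_arr {A B} (ra : ReifyReflect A) (rb : ReifyReflect B) :
  ReifyReflect (arr A B).
Proof.
  refine (mkReifyReflect (arr A B)
    (fun Γ f => lam (reify rb (expAp (f : ExpEl (PTy A) (PTy B) Γ) (dropOPE A (idOPE Γ))
                                     (reflect ra (var vz)))))
    (fun Γ t => reflectArr ra rb t) _ _).
  - abstract (intros Γ Γ' o f; simpl;
      rewrite <- reify_nat, expAp_nat, <- dropOPE_id_natural;
      change (var (@vz Γ' A)) with (wk (var (@vz Γ A)) (cext Γ' A) (keepOPE A o));
      rewrite reflect_nat; reflexivity).
  - abstract (intros; apply exp_ext; intros; unfold expAp; simpl;
      rewrite wk_comp; reflexivity).
Defined.

Definition reflectBox {A} (ra : ReifyReflect A) {Γ} (t : Tm Γ (box A)) : BoxEl (PTy A) Γ.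
Proof.
  refine (exist _ (fun Γ' o Δ e => reflect ra (unbox (wk t Γ' o) e)) _).
  abstract (intros; rewrite <- reflect_nat, wk_unbox;
    destruct (factorOPE e Δ' o') as [G2 [o2 e2]]; rewrite wk_comp; reflexivity).
Defined.

Definition reifyReflect_box {A} (ra : ReifyReflect A) : ReifyReflect (box A).
Proof.
  refine (mkReifyReflect (box A)
    (fun Γ h => tbox (reify ra (boxAp (h : BoxEl (PTy A) Γ) (idOPE Γ) (ext_lk ext_nil))))
    (fun Γ t => reflectBox ra t) _ _).
  - abstract (intros Γ Γ' o h; simpl; rewrite <- reify_nat, boxAp_nat; simpl;
      rewrite compOPE_id_l, compOPE_id_r; reflexivity).
  - abstract (intros; apply box_ext; intros; unfold boxAp; simpl;
      rewrite wk_comp; reflexivity).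
Defined.

Fixpoint reifyReflect (A : Ty) : ReifyReflect A :=
  match A with
  | iota => reifyReflect_iota
  | arr A B => reifyReflect_arr (reifyReflect A) (reifyReflect B)
  | box A => reifyReflect_box (reifyReflect A)
  end.

Fixpoint Rel (A : Ty) : forall Γ, Tm Γ A -> PF (PTy A) Γ -> Prop :=
  match A return forall Γ, Tm Γ A -> PF (PTy A) Γ -> Prop with
  | iota => fun Γ t x => conv t x
  | arr A B => fun Γ t f => forall Γ' (o : OPE Γ' Γ) u a,
      Rel A Γ' u a -> Rel B Γ' (app (wk t Γ' o) u) (expAp (f : ExpEl (PTy A) (PTy B) Γ) o a)
  | box A => fun Γ t h => forall Γ' (o : OPE Γ' Γ) Δ (e : Ext Γ' Δ),
      Rel A Δ (unbox (wk t Γ' o) e) (boxAp (h : BoxEl (PTy A) Γ) o e)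
  end.

Lemma Rel_wk {A Γ Γ'} (t : Tm Γ A) x (o : OPE Γ' Γ) :
  Rel A Γ t x -> Rel A Γ' (wk t Γ' o) (pact o x).
Proof.
  destruct A; simpl; intros H.
  - apply conv_wk; auto.
  - intros Γ'' o' u a Ha. rewrite wk_comp. exact (H _ (compOPE o' o) u a Ha).
  - intros Γ'' o' Δ e. rewrite wk_comp. exact (H _ (compOPE o' o) Δ e).
Qed.

Lemma Rel_conv {A Γ} (t t' : Tm Γ A) x : conv t t' -> Rel A Γ t' x -> Rel A Γ t x.
Proof.
  revert Γ t t' x; induction A; simpl; intros Γ t t' x Hc H.
  - eapply cv_trans; eauto.
  - intros Γ' o u a Ha. eapply IHA2; [| apply H; eauto].
    apply cv_app; [apply conv_wk; auto | apply cv_refl].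
  - intros Γ' o Δ e. eapply IHA; [| apply H]. apply cv_unbox. apply conv_wk; auto.
Qed.

Lemma Rel_reify_reflect (A : Ty) :
  (forall Γ (t : Tm Γ A) x, Rel A Γ t x -> conv t (reify (reifyReflect A) x)) /\
  (forall Γ (t : Tm Γ A), Rel A Γ t (reflect (reifyReflect A) t)).
Proof.
  induction A as [| A [reifyA reflectA] B [reifyB reflectB] | A [reifyA reflectA]]; split.
  - simpl; auto.
  - intros; apply cv_refl.
  - intros Γ t f H. simpl.
    eapply cv_trans; [apply cv_eta_fun |]. apply cv_lam, reifyB, H, reflectA.
  - intros Γ t Γ' o u a Ha. unfold expAp; simpl.
    eapply Rel_conv; [| apply reflectB].
    apply cv_app; [apply cv_refl | apply reifyA; auto].
  - intros Γ t h H. simpl.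
    eapply cv_trans; [apply cv_eta_box |]. apply cv_box, reifyA.
    specialize (H Γ (idOPE Γ) _ (ext_lk ext_nil)). rewrite wk_id in H. exact H.
  - intros Γ t Γ' o Δ e. apply reflectA.
Qed.

Lemma Rel_reify {A Γ} (t : Tm Γ A) x : Rel A Γ t x -> conv t (reify (reifyReflect A) x).
Proof. apply Rel_reify_reflect. Qed.

Lemma Rel_reflect {A Γ} (t : Tm Γ A) : Rel A Γ t (reflect (reifyReflect A) t).
Proof. apply Rel_reify_reflect. Qed.

Fixpoint RelSub (D : Ctx) : forall Γ, Sub Γ D -> PF (PCtx D) Γ -> Prop :=
  match D return forall Γ, Sub Γ D -> PF (PCtx D) Γ -> Prop with
  | cnil => fun _ _ _ => True
  | cext D0 A => fun Γ s ρ => RelSub D0 Γ (fst s) (fst ρ) /\ Rel A Γ (snd s) (snd ρ)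
  | clock D0 => fun Γ s ρ =>
      match s with existT _ G1 (s1, e1) =>
        exists ρ1, ρ = (existT _ G1 (ρ1, e1) : PF (PCtx (clock D0)) Γ)
                   /\ RelSub D0 G1 s1 ρ1 end
  end.

Lemma RelSub_wk {D Γ Γ'} (s : Sub Γ D) ρ (o : OPE Γ' Γ) :
  RelSub D Γ s ρ -> RelSub D Γ' (wkSub D Γ Γ' o s) (pact o ρ).
Proof.
  revert Γ Γ' s ρ o; induction D; intros Γ Γ' s ρ o H; simpl in *.
  - auto.
  - destruct H; split; [apply IHD; auto | apply Rel_wk; auto].
  - destruct s as [G1 [s1 e1]]. destruct H as [ρ1 [-> H]]. simpl.
    destruct (factorOPE e1 Γ' o) as [G2 [o2 e2]].
    exists (pact o2 ρ1). split; [reflexivity | apply IHD; auto].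
Qed.

Lemma Rel_substVar {D Γ A} (v : Var D A) s ρ :
  RelSub D Γ s ρ -> Rel A Γ (substVar v Γ s) (ap (semVar PModel PI v) ρ).
Proof. revert s ρ; induction v; simpl; intros s ρ [Hs Hv]; auto. Qed.

Lemma RelSub_factorSub {D Δ Γ} (e : Ext D Δ) (s : Sub Γ Δ) ρ : RelSub Δ Γ s ρ ->
  match factorSub e Γ s with existT _ G' (s', e') =>
    exists ρ', RelSub D G' s' ρ' /\
      forall (X : Psh) (f : PHom (PCtx D) (Pbox X)),
        ap (semUnbox PModel PI e X f) ρ = boxAp (ap f ρ') (idOPE G') e' end.
Proof.
  revert Γ s ρ; induction e; intros Γ s ρ H.
  - exists ρ. split; auto.
  - simpl in *. destruct H. apply IHe; auto.
  - destruct s as [G1 [s1 e1]]. destruct H as [ρ1 [-> H]]. simpl.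
    specialize (IHe _ _ _ H).
    destruct (factorSub e G1 s1) as [G3 [s3 e3]].
    destruct IHe as [ρ3 [HR Heq]]. exists ρ3. split; auto. intros X f.
    change (ap (semUnbox PModel PI (ext_lk e) X f)
              (existT _ G1 (ρ1, e1) : PF (PCtx (clock G)) Γ))
      with (boxAp (ap (semUnbox PModel PI e (Pbox X) (Pcomp (Pbdelta X) f)) ρ1) (idOPE G1) e1).
    rewrite Heq.
    change (ap (Pcomp (Pbdelta X) f) ρ3) with (deltaEl (ap f ρ3)).
    rewrite boxAp_delta, boxAp_inner, factorOPE_id, compOPE_id_l. reflexivity.
Qed.

Lemma subst_idSub {G A} (t : Tm G A) : conv (subst t G (idSub G)) t.
Proof.
  pose proof (subst_resSub_idSub t (idOPE G)) as H.
  rewrite resSub_id, wk_id in H. exact H.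
Qed.

Lemma app_wk_subst_lam {D Γ Γ' A B} (t : Tm (cext D A) B) (s : Sub Γ D) (o : OPE Γ' Γ)
  (u : Tm Γ' A) :
  conv (app (wk (subst (lam t) Γ s) Γ' o) u) (subst t Γ' (wkSub D Γ Γ' o s, u)).
Proof.
  simpl. eapply cv_trans; [apply cv_beta_fun |].
  rewrite subst_wk. simpl. rewrite subst_subst. simpl.
  rewrite compSub_wkSub_l, resSub_drop.
  apply conv_subst. split; [apply convSub_compSub_resSub_idSub | apply cv_refl].
Qed.

Lemma unbox_wk_subst_box {D Γ Γ' Δ A} (t : Tm (clock D) A) (s : Sub Γ D) (o : OPE Γ' Γ)
  (e : Ext Γ' Δ) :
  conv (unbox (wk (subst (tbox t) Γ s) Γ' o) e)
       (subst t Δ (existT _ Γ' (wkSub D Γ Γ' o s, e))).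
Proof.
  simpl. eapply cv_trans; [apply cv_beta_box |].
  rewrite wk_subst, subst_subst. apply conv_subst. simpl.
  exists lf_nil. simpl. rewrite wkSub_id.
  pose proof (convSub_compSub_resSub_idSub (wkSub D Γ Γ' o s) (idOPE Γ')) as H.
  rewrite resSub_id, wkSub_id in H. exact H.
Qed.

Lemma Rel_subst {D A} (t : Tm D A) :
  forall Γ s ρ, RelSub D Γ s ρ -> Rel A Γ (subst t Γ s) (ap (semTm PModel PI t) ρ).
Proof.
  induction t; intros Γ s ρ H.
  - apply Rel_substVar; auto.
  - intros Γ' o u a Ha. eapply Rel_conv; [apply app_wk_subst_lam |].
    apply IHt. split; [apply RelSub_wk; auto | auto].
  - specialize (IHt1 _ _ _ H Γ (idOPE Γ) _ _ (IHt2 _ _ _ H)).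
    rewrite wk_id in IHt1. exact IHt1.
  - intros Γ' o Δ e. eapply Rel_conv; [apply unbox_wk_subst_box |].
    apply IHt. exists (pact o ρ). split; [reflexivity | apply RelSub_wk; auto].
  - simpl. pose proof (RelSub_factorSub e s ρ H) as HF.
    destruct (factorSub e Γ s) as [G' [s' e']], HF as [ρ' [HR ->]].
    specialize (IHt _ _ _ HR G' (idOPE G') Γ e'). rewrite wk_id in IHt. exact IHt.
Qed.

Fixpoint idEnv (G : Ctx) : PF (PCtx G) G :=
  match G return PF (PCtx G) G with
  | cnil => tt
  | cext G0 A =>
      ((pact (dropOPE A (idOPE G0)) (idEnv G0), reflect (reifyReflect A) (var vz))
        : PF (PCtx (cext G0 A)) (cext G0 A))
  | clock G0 => (existT _ G0 (idEnv G0, ext_lk ext_nil) : PF (PCtx (clock G0)) (clock G0))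
  end.

Lemma RelSub_idSub (G : Ctx) : RelSub G G (idSub G) (idEnv G).
Proof.
  induction G; simpl.
  - auto.
  - split; [apply RelSub_wk; auto | apply Rel_reflect].
  - exists (idEnv G). split; auto.
Qed.

Definition nf {G A} (t : Tm G A) : Tm G A :=
  reify (reifyReflect A) (ap (semTm PModel PI t) (idEnv G)).

Lemma nf_sound {G A} (t : Tm G A) : conv t (nf t).
Proof.
  eapply cv_trans; [apply cv_sym, subst_idSub |].
  apply Rel_reify, Rel_subst, RelSub_idSub.
Qed.

Theorem theorem6 (G : Ctx) (A : Ty) (t u : Tm G A) :
  (forall (M : Model) (I : Ob M), semTm M I t = semTm M I u) ->
  conv t u.
Proof.
  intros Hsem.
  eapply cv_trans; [apply nf_sound |].
  unfold nf. rewrite (Hsem PModel PI). apply cv_sym, nf_sound.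
Qed.
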